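(* Assume the standing hypotheses (K), (F), (h), ($\theta$) of the context. Then: (1) There is $\varepsilon_0>0$ such that $\mathbf r\mapsto\mathcal F_{2\varepsilon}(\mathbf r)=F_1(r_1)+F_2(r_2)+2\varepsilon h(\mathbf r)$ is convex on $[0,\infty)^2$ for every $0<\varepsilon\le\varepsilon_0$, strictly convex if $\varepsilon<\varepsilon_0$. (2) For all $\mathbf r\in[0,\infty)^2$ and $0<\varepsilon\le\varepsilon_0$: $\tfrac12F_1(r_1)+\tfrac12F_2(r_2)\le\mathcal F_\varepsilon(\mathbf r)\le(1+\tfrac\varepsilon2\kappa_{1,1})F_1(r_1)+(1+\tfrac\varepsilon2\kappa_{2,2})F_2(r_2)$. (3) For $0\le r\le r_0$ and $j=1,2$: $\frac{m_j}{\beta_j+1}r^{\beta_j+1}\le F_j'(r)\le\frac{M_j}{\beta_j+1}r^{\beta_j+1}$ and $\frac{m_j}{(\beta_j+1)(\beta_j+2)}r^{\beta_j+2}\le F_j(r)\le\frac{M_j}{(\beta_j+1)(\beta_j+2)}r^{\beta_j+2}$. (4) For $j=1,2$ there are constants $\alpha_j$ such that $F_j'(r)\le\alpha_j(\min\{1,r\}+F_j(r))$ for all $r\ge0$. (5) For every $H>0$ there is $\beta_H>0$ such that for all $\bar{\mathbf r}\in[0,\infty)^2$ with $\bar r_1,\bar r_2\le H$, all $\mathbf r\in[0,\infty)^2$ and all $i,j\in\{1,2\}$, \[\max\{r_1,r_2\}\,|\theta_{j,i}(\mathbf u)-\theta_{j,i}(\bar{\mathbf u})|^2\le\beta_H\big(\mathrm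 d_{F_1}(r_1|\bar r_1)+\mathrm d_{F_2}(r_2|\bar r_2)\big),\] where $\mathbf u=(F_1'(r_1),F_2'(r_2))$, $\bar{\mathbf u}=(F_1'(\bar r_1),F_2'(\bar r_2))$ and $\mathrm d_F(r|\bar r):=F(r)-F(\bar r)-F'(\bar r)(r-\bar r)$ is the Bregman divergence of a convex function $F$.
   Context: Let $d\ge1$. Standing hypotheses. (K): $K:\mathbb R^d\to[0,\infty)$ is radially symmetric, $K(0)=0$, $K\in C^2$, $\nabla^2K\ge\lambda\,\mathrm{Id}$ for some $\lambda>0$, $\|\nabla^2K\|\le C_K$. (F): for $j=1,2$, $F_j:[0,\infty)\to[0,\infty)$ is $C^2$ with $F_j''(r)>0$ for $r>0$, $F_j(0)=F_j'(0)=0$, $\liminf_{r\to\infty}F_j''(r)>0$, $\limsup_{r\to\infty}F_j'(r)/F_j(r)<\infty$; there are $m_j,M_j>0$, $\beta_j\ge0$, $r_0>0$ with $m_jr^{\beta_j}\le F_j''(r)\le M_jr^{\beta_j}$ for $0\le r\le r_0$; and $F_j(r)-rF_j'(r)+r^2F_j''(r)\ge0$ for all $r\ge0$. (h): $h:[0,\infty)^2\to\mathbb R$ is $C^2$, and $h$ and $\partial_{r_1}h,\partial_{r_2}h$ vanish on $\{r_1=0\}\cup\{r_2=0\}$. Define for $\mathbf u\in[0,\infty)^2$: $\theta_j(\mathbf u):=\partial_{r_j}h((F_1')^{-1}(u_1),(F_2')^{-1}(u_2))$ and $\theta_{j,i}:=\partial_{u_i}\theta_j$, so $\theta_{j,i}(\mathbf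 u)=\partial_{r_i}\partial_{r_j}h(\mathbf r)/F_i''(r_i)$ with $r_k=(F_k')^{-1}(u_k)$. ($\theta$): each $\theta_{j,i}$ is locally Lipschitz on $[0,\infty)^2$, and there are $\kappa_{j,i}>0$ with $|\theta_{j,i}(\mathbf u)|\le\kappa_{j,i}\min\{1,u_1,u_2,\sqrt{(F_i')^{-1}(u_i)/(F_j')^{-1}(u_j)}\}$ for all $\mathbf u$. Notation: for $\varepsilon\ge0$, $\mathcal F_\varepsilon(\mathbf r):=F_1(r_1)+F_2(r_2)+\varepsilon h(\mathbf r)$. *)

From Stdlib Require Import Reals Lra ClassicalEpsilon.
From Coquelicot Require Import Coquelicot.
Open Scope R_scope.

Inductive idx : Type := I1 | I2.

Definition coord (i : idx) (p : R * R) : R :=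
  match i with I1 => fst p | I2 => snd p end.
Definition upd (i : idx) (p : R * R) (x : R) : R * R :=
  match i with I1 => (x, snd p) | I2 => (fst p, x) end.

Definition quad (p : R * R) : Prop := 0 <= fst p /\ 0 <= snd p.

Definition dist2 (p q : R * R) : R :=
  sqrt ((fst p - fst q) ^ 2 + (snd p - snd q) ^ 2).
Definition comb (t : R) (p q : R * R) : R * R :=
  (t * fst p + (1 - t) * fst q, t * snd p + (1 - t) * snd q).

(* Real power r^a for r >= 0, with the convention 0^a = 0 for a > 0, 0^0 = 1. *)
Definition pw (r a : R) : R :=
  if Rle_dec r 0 then (if Req_EM_T a 0 then 1 else 0) else Rpower r a.

(* Derivative of f at x relative to the set S (one-sided at boundary points):
   the difference quotient tends to l as y -> x, y in S, y <> x. *)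
Definition is_deriv_within (S : R -> Prop) (f : R -> R) (x l : R) : Prop :=
  filterlim (fun y => (f y - f x) / (y - x))
    (within (fun y => S y /\ y <> x) (locally x)) (locally l).

Definition nonneg (r : R) : Prop := 0 <= r.

Definition cont_nonneg (f : R -> R) (x : R) : Prop :=
  filterlim f (within nonneg (locally x)) (locally (f x)).
Definition cont_quad (g : R * R -> R) (p : R * R) : Prop :=
  filterlim g (within quad (locally p)) (locally (g p)).

Definition is_partial_quad (i : idx) (g : R * R -> R) (p : R * R) (l : R) : Prop :=
  is_deriv_within (fun x => quad (upd i p x)) (fun x => g (upd i p x)) (coord i p) l.

Definition loc_lipschitz_quad (g : R * R -> R) : Prop :=
  forall p, quad p -> exists delta L, 0 < delta /\
    forall v w, quad v -> quad w -> dist2 v p < delta -> dist2 w p < delta ->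
      Rabs (g v - g w) <= L * dist2 v w.

(* Inverse of a function on [0,oo): some r >= 0 with f r = u (unique when f is
   strictly increasing, as F_j' is). *)
Definition finv (f : R -> R) (u : R) : R :=
  epsilon (inhabits 0) (fun r => 0 <= r /\ f r = u).

Definition convex_quad (f : R * R -> R) : Prop :=
  forall p q t, quad p -> quad q -> 0 <= t <= 1 ->
    f (comb t p q) <= t * f p + (1 - t) * f q.
Definition strictly_convex_quad (f : R * R -> R) : Prop :=
  forall p q t, quad p -> quad q -> p <> q -> 0 < t < 1 ->
    f (comb t p q) < t * f p + (1 - t) * f q.

Definition HypF (F dF d2F : R -> R) (m M beta r0 : R) : Prop :=
  (forall r, 0 <= r -> is_deriv_within nonneg F r (dF r)) /\
  (forall r, 0 <= r -> is_deriv_within nonneg dF r (d2F r)) /\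
  (forall r, 0 <= r -> cont_nonneg d2F r) /\
  (forall r, 0 <= r -> 0 <= F r) /\
  (forall r, 0 < r -> 0 < d2F r) /\
  F 0 = 0 /\ dF 0 = 0 /\
  (* liminf_{r->oo} F''(r) > 0 *)
  (exists c R0, 0 < c /\ forall r, R0 <= r -> c <= d2F r) /\
  (* limsup_{r->oo} F'(r)/F(r) < oo *)
  (exists C R0, forall r, R0 <= r -> dF r / F r <= C) /\
  0 < m /\ 0 < M /\ 0 <= beta /\ 0 < r0 /\
  (forall r, 0 <= r <= r0 -> m * pw r beta <= d2F r <= M * pw r beta) /\
  (forall r, 0 <= r -> F r - r * dF r + r ^ 2 * d2F r >= 0).

Definition Hyph (h : R * R -> R) (dh : idx -> R * R -> R)
    (d2h : idx -> idx -> R * R -> R) : Prop :=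
  (forall i p, quad p -> is_partial_quad i h p (dh i p)) /\
  (forall i j p, quad p -> is_partial_quad i (dh j) p (d2h i j p)) /\
  (forall p, quad p -> cont_quad h p) /\
  (forall i p, quad p -> cont_quad (dh i) p) /\
  (forall i j p, quad p -> cont_quad (d2h i j) p) /\
  (forall p, quad p -> (fst p = 0 \/ snd p = 0) ->
     h p = 0 /\ dh I1 p = 0 /\ dh I2 p = 0).

Definition theta (dF : idx -> R -> R) (dh : idx -> R * R -> R) (j : idx)
    (u : R * R) : R :=
  dh j (finv (dF I1) (fst u), finv (dF I2) (snd u)).

Definition HypTheta (dF : idx -> R -> R) (dh : idx -> R * R -> R)
    (Th : idx -> idx -> R * R -> R) (kappa : idx -> idx -> R) : Prop :=
  (forall j i u, quad u -> is_partial_quad i (theta dF dh j) u (Th j i u)) /\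
  (forall j i, loc_lipschitz_quad (Th j i)) /\
  (forall j i, 0 < kappa j i) /\
  (forall j i u, quad u ->
     Rabs (Th j i u) <= kappa j i *
       Rmin (Rmin 1 (Rmin (fst u) (snd u)))
            (sqrt (finv (dF i) (coord i u) / finv (dF j) (coord j u)))).

Definition Feps (F : idx -> R -> R) (h : R * R -> R) (eps : R) (p : R * R) : R :=
  F I1 (fst p) + F I2 (snd p) + eps * h p.

Definition bregman (F dF : R -> R) (r rb : R) : R :=
  F r - F rb - dF rb * (r - rb).

(* Since F_j, F_j' are only given on [0, oo), every one-variable estimate is a comparison
   argument (MVT plus right continuity at the left end point); integrating the bounds on
   F_j'' this way gives (3), (4) and the lower bounds on Bregman divergences.
   Writing d_{r_j} h = theta_j o (F_1', F_2'), the chain rule gives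
   d_{r_i} d_{r_j} h = theta_{j,i} F_i''. As h and dh vanish on the axes, integrating twice
   from an axis gives |h| <= kappa_{i,i} F_i, hence (2); and the bounds on theta_{j,i}, whose
   square-root factors cancel in the cross term by Schwarz's theorem, make the Hessian of
   F_{2 eps} positive definite inside the quadrant for eps <= 1 / (4 sum kappa), hence (1).
   For (5), near the diagonal theta_{j,i} is Lipschitz on a compact box and
   (F'(r) - F'(rb))^2 <= 2 (sup F'') d_F(r | rb); far from it theta_{j,i} is bounded by kappa
   while d_F(r | rb) grows linearly in |r - rb|. *)

From Stdlib Require Import Reals Lra ClassicalEpsilon Classical List.
From Coquelicot Require Import Coquelicot.
Open Scope R_scope.

(** * One-variable comparison arguments *)

Definition right_cont (f : R -> R) (a : R) : Prop :=
  filterlim f (at_right a) (locally (f a)).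

Lemma right_cont_plus f g a :
  right_cont f a -> right_cont g a -> right_cont (fun y => f y + g y) a.
Proof. intros Hf Hg. exact (filterlim_comp_2 _ _ _ Hf Hg (filterlim_plus (f a) (g a))). Qed.

Lemma right_cont_mult f g a :
  right_cont f a -> right_cont g a -> right_cont (fun y => f y * g y) a.
Proof. intros Hf Hg. exact (filterlim_comp_2 _ _ _ Hf Hg (filterlim_mult (f a) (g a))). Qed.

Lemma right_cont_opp f a : right_cont f a -> right_cont (fun y => - f y) a.
Proof. intros Hf. eapply filterlim_comp; [exact Hf | apply (filterlim_opp (f a))]. Qed.

Lemma right_cont_minus f g a :
  right_cont f a -> right_cont g a -> right_cont (fun y => f y - g y) a.
Proof. intros Hf Hg. apply right_cont_plus; [exact Hf | now apply right_cont_opp]. Qed.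

Lemma right_cont_const c a : right_cont (fun _ => c) a.
Proof. apply filterlim_const. Qed.

Lemma right_cont_id a : right_cont (fun y => y) a.
Proof. intros P HP. now apply filter_le_within. Qed.

Lemma right_cont_scal c f a : right_cont f a -> right_cont (fun y => c * f y) a.
Proof. intros Hf. apply right_cont_mult; [apply right_cont_const | exact Hf]. Qed.

Lemma right_cont_ext f g a :
  (forall y, f y = g y) -> right_cont f a -> right_cont g a.
Proof.
  intros E Hf. unfold right_cont. rewrite <- E.
  exact (filterlim_ext _ _ E Hf).
Qed.

Lemma right_cont_of_derivable f a l : derivable_pt_lim f a l -> right_cont f a.
Proof.
  intros Hd. apply (filterlim_filter_le_1 (F := locally a)); [apply filter_le_within|].
  apply continuity_pt_filterlim, derivable_continuous_pt. now exists l.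
Qed.

Lemma right_cont_eps f a : right_cont f a ->
  forall eps, 0 < eps -> exists d, 0 < d /\
    forall y, a < y < a + d -> Rabs (f y - f a) < eps.
Proof.
  intros Hf eps Heps.
  destruct (proj1 (filterlim_locally _ _) Hf (mkposreal _ Heps)) as [d Hd].
  exists d; split; [apply cond_pos|]. intros y Hy.
  apply (Hd y); [change (Rabs (y - a) < d); apply Rabs_def1 | ]; lra.
Qed.

(* Off the base point f y = f a + q(y) (y - a), with q the converging difference
   quotient; at the base point there is nothing to prove. *)
Lemma cont_within_of_deriv_within S f a l :
  is_deriv_within S f a l -> filterlim f (within S (locally a)) (locally (f a)).
Proof.
  intros Hd.
  assert (Hz : filterlim (fun y => y - a) (within (fun y => S y /\ y <> a) (locally a))
                 (locally 0)).
  { apply filterlim_locally. intros eps. exists eps. intros y Hy _.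
    change (Rabs (y - a - 0) < eps). rewrite Rminus_0_r. exact Hy. }
  assert (Hlin : filterlim (fun y => f a + (f y - f a) / (y - a) * (y - a))
                   (within (fun y => S y /\ y <> a) (locally a)) (locally (f a + l * 0))).
  { eapply filterlim_comp_2; [apply filterlim_const | | apply (filterlim_plus (f a))].
    exact (filterlim_comp_2 _ _ _ Hd Hz (filterlim_mult l 0)). }
  rewrite Rmult_0_r, Rplus_0_r in Hlin.
  intros P HP. destruct (Hlin P HP) as [d Hd']. exists d. intros y Hy HS.
  destruct (Req_dec y a) as [->|Hne]; [now apply locally_singleton|].
  replace (f y) with (f a + (f y - f a) / (y - a) * (y - a)) by (field; lra).
  apply Hd'; auto.
Qed.

Lemma right_cont_of_cont_within S f a :
  (forall y, a < y -> S y) -> filterlim f (within S (locally a)) (locally (f a)) ->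
  right_cont f a.
Proof.
  intros HS Hf. eapply filterlim_filter_le_1; [|exact Hf].
  intros P [d Hd]. exists d. intros y Hy Hay. apply Hd; [exact Hy | now apply HS].
Qed.

Lemma derivable_of_deriv_within S f x l :
  (exists d, 0 < d /\ forall y, Rabs (y - x) < d -> S y) ->
  is_deriv_within S f x l -> derivable_pt_lim f x l.
Proof.
  intros [d [Hd HS]] H eps Heps.
  destruct (proj1 (filterlim_locally _ _) H (mkposreal _ Heps)) as [d1 Hd1].
  assert (Hm : 0 < Rmin d d1) by (apply Rmin_pos; [lra | apply cond_pos]).
  exists (mkposreal _ Hm). intros k Hk Hkd. simpl in Hkd.
  assert (Hk1 := Rmin_l d d1). assert (Hk2 := Rmin_r d d1).
  replace ((f (x + k) - f x) / k) with ((f (x + k) - f x) / (x + k - x))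
    by (f_equal; ring).
  apply (Hd1 (x + k)).
  - change (Rabs (x + k - x) < d1). replace (x + k - x) with k by ring. lra.
  - split; [apply HS; replace (x + k - x) with k by ring; lra | lra].
Qed.

Lemma continuity_pt_clamp f c : 0 <= c -> cont_nonneg f c ->
  continuity_pt (fun x => f (Rmax 0 x)) c.
Proof.
  intros Hc Hf. apply continuity_pt_filterlim. rewrite (Rmax_right 0 c) by lra.
  eapply filterlim_comp; [|exact Hf].
  unfold filterlim, filter_le, filtermap, within.
  intros P [d Hd]. exists d. intros y Hy. apply Hd; [|apply Rmax_l].
  change (Rabs (Rmax 0 y - c) < d). change (Rabs (y - c) < d) in Hy.
  unfold Rmax. destruct (Rle_dec 0 y); [exact Hy|].
  rewrite Rabs_left1 in * by lra. lra.
Qed.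

(* Stdlib states the derivative rules for [plus_fct], [mult_fct], ...; these lambda
   forms are the ones [apply] unifies with concrete goals. *)
Lemma dpl_plus f g x a b : derivable_pt_lim f x a -> derivable_pt_lim g x b ->
  derivable_pt_lim (fun y => f y + g y) x (a + b).
Proof. intros; now apply derivable_pt_lim_plus. Qed.

Lemma dpl_minus f g x a b : derivable_pt_lim f x a -> derivable_pt_lim g x b ->
  derivable_pt_lim (fun y => f y - g y) x (a - b).
Proof. intros; now apply derivable_pt_lim_minus. Qed.

Lemma dpl_mult f g x a b : derivable_pt_lim f x a -> derivable_pt_lim g x b ->
  derivable_pt_lim (fun y => f y * g y) x (a * g x + f x * b).
Proof. intros; now apply derivable_pt_lim_mult. Qed.

Lemma dpl_scal c f x a : derivable_pt_lim f x a ->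
  derivable_pt_lim (fun y => c * f y) x (c * a).
Proof. intros; now apply derivable_pt_lim_scal. Qed.

Lemma dpl_comp f g x a b : derivable_pt_lim g x a -> derivable_pt_lim f (g x) b ->
  derivable_pt_lim (fun y => f (g y)) x (b * a).
Proof. intros; now apply (derivable_pt_lim_comp g f). Qed.

Lemma dpl_value f x l l' : derivable_pt_lim f x l -> l = l' -> derivable_pt_lim f x l'.
Proof. now intros ? <-. Qed.

Lemma derivable_pt_lim_linear k x : derivable_pt_lim (fun s => k * s) x k.
Proof.
  assert (H := derivable_pt_lim_scal id k x 1 (derivable_pt_lim_id x)).
  rewrite Rmult_1_r in H. exact H.
Qed.

Lemma le_of_deriv_nonneg f f' a b : a <= b ->
  (forall x, a < x <= b -> derivable_pt_lim f x (f' x)) ->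
  (forall x, a < x < b -> 0 <= f' x) -> right_cont f a -> f a <= f b.
Proof.
  intros Hab Hd Hp Hr.
  destruct (Req_dec a b) as [<-|Hne]; [lra|].
  apply Rnot_lt_le; intro Hlt.
  destruct (right_cont_eps f a Hr (f a - f b)) as [d [Hd0 Hnear]]; [lra|].
  assert (Hm := Rmin_pos d (b - a) Hd0 ltac:(lra)).
  assert (Hm1 := Rmin_l d (b - a)). assert (Hm2 := Rmin_r d (b - a)).
  set (a' := a + Rmin d (b - a) / 2) in *.
  (* f a' is close to f a > f b, while the MVT on [a', b] gives f a' <= f b *)
  assert (Hclose : Rabs (f a' - f a) < f a - f b) by (apply Hnear; unfold a'; lra).
  destruct (MVT_cor2 f f' a' b) as [c [Hc Hcin]]; [unfold a'; lra| |].
  { intros c Hc. apply Hd. unfold a' in *. lra. }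
  assert (0 <= f' c * (b - a')) by (apply Rmult_le_pos; [apply Hp|]; unfold a' in *; lra).
  apply Rabs_def2 in Hclose. lra.
Qed.

Lemma lt_of_deriv_pos f f' a b : a < b ->
  (forall x, a < x <= b -> derivable_pt_lim f x (f' x)) ->
  (forall x, a < x < b -> 0 < f' x) -> right_cont f a -> f a < f b.
Proof.
  intros Hab Hd Hp Hr. set (c := (a + b) / 2).
  assert (Hac : f a <= f c).
  { apply (le_of_deriv_nonneg f f'); [unfold c; lra | | | exact Hr].
    - intros x Hx. apply Hd. unfold c in Hx. lra.
    - intros x Hx. left. apply Hp. unfold c in Hx. lra. }
  destruct (MVT_cor2 f f' c b) as [x [Hx Hxin]]; [unfold c; lra| |].
  { intros x Hx. apply Hd. unfold c in Hx. lra. }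
  assert (0 < f' x * (b - c)) by (apply Rmult_lt_0_compat; [apply Hp|]; unfold c in *; lra).
  lra.
Qed.

Lemma incr_le_of_deriv_le f g f' g' a b : a <= b ->
  (forall x, a < x <= b -> derivable_pt_lim f x (f' x)) ->
  (forall x, a < x <= b -> derivable_pt_lim g x (g' x)) ->
  (forall x, a < x < b -> f' x <= g' x) ->
  right_cont f a -> right_cont g a -> f b - f a <= g b - g a.
Proof.
  intros Hab Hf Hg Hle Hrf Hrg.
  enough (g a - f a <= g b - f b) by lra.
  apply (le_of_deriv_nonneg (fun x => g x - f x) (fun x => g' x - f' x)); auto.
  - intros x Hx. apply derivable_pt_lim_minus; auto.
  - intros x Hx. specialize (Hle x Hx). lra.
  - now apply right_cont_minus.
Qed.

Lemma incr_lt_of_deriv_lt f g f' g' a b : a < b ->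
  (forall x, a < x <= b -> derivable_pt_lim f x (f' x)) ->
  (forall x, a < x <= b -> derivable_pt_lim g x (g' x)) ->
  (forall x, a < x < b -> f' x < g' x) ->
  right_cont f a -> right_cont g a -> f b - f a < g b - g a.
Proof.
  intros Hab Hf Hg Hlt Hrf Hrg.
  enough (g a - f a < g b - f b) by lra.
  apply (lt_of_deriv_pos (fun x => g x - f x) (fun x => g' x - f' x)); auto.
  - intros x Hx. apply derivable_pt_lim_minus; auto.
  - intros x Hx. specialize (Hlt x Hx). lra.
  - now apply right_cont_minus.
Qed.

Lemma abs_le_of_deriv_abs_le f g f' g' a b : a <= b ->
  (forall x, a < x <= b -> derivable_pt_lim f x (f' x)) ->
  (forall x, a < x <= b -> derivable_pt_lim g x (g' x)) ->
  (forall x, a < x < b -> Rabs (f' x) <= g' x) ->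
  right_cont f a -> right_cont g a -> Rabs (f a) <= g a -> Rabs (f b) <= g b.
Proof.
  intros Hab Hf Hg Hle Hrf Hrg Ha.
  assert (Hup : f b - f a <= g b - g a).
  { apply (incr_le_of_deriv_le f g f' g'); auto.
    intros x Hx. specialize (Hle x Hx). apply Rabs_le_between in Hle. lra. }
  assert (Hlow : - f b - - f a <= g b - g a).
  { apply (incr_le_of_deriv_le (fun x => - f x) g (fun x => - f' x) g'); auto.
    - intros x Hx. apply (derivable_pt_lim_opp f). now apply Hf.
    - intros x Hx. specialize (Hle x Hx). apply Rabs_le_between in Hle. lra.
    - now apply right_cont_opp. }
  apply Rabs_le_between in Ha. apply Rabs_le_between. lra.
Qed.

Definition slope_increasing (g : R -> R) : Prop :=
  exists g', (forall s, 0 < s < 1 -> derivable_pt_lim g s (g' s)) /\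
    (forall s t, 0 < s -> s < t -> t < 1 -> g' s < g' t).

Lemma slope_increasing_ext g1 g2 :
  (forall s, 0 < s < 1 -> g1 s = g2 s) -> slope_increasing g1 -> slope_increasing g2.
Proof.
  intros E [g' [Hd Hinc]]. exists g'. split; [|exact Hinc].
  intros s Hs. apply (derivable_pt_lim_locally_ext g1 g2 s 0 1); auto.
Qed.

(* The chord lies above the graph: compare g with its tangent slope g'(t) on [0, t]
   and, after the reflection s |-> 1 - s, on [t, 1]. *)
Lemma convex_lt_of_slope_increasing g :
  slope_increasing g -> right_cont g 0 -> right_cont (fun s => g (1 - s)) 0 ->
  forall t, 0 < t < 1 -> g t < t * g 1 + (1 - t) * g 0.
Proof.
  intros [g' [Hd Hinc]] H0 H1 t Ht. set (k := g' t).
  assert (Hleft : g t - g 0 < k * t - k * 0).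
  { apply (incr_lt_of_deriv_lt g (fun s => k * s) g' (fun _ => k)); try lra.
    - intros x Hx. apply Hd. lra.
    - intros x _. apply derivable_pt_lim_linear.
    - intros x Hx. apply Hinc; lra.
    - exact H0.
    - apply right_cont_scal, right_cont_id. }
  assert (Hright : g (1 - (1 - t)) - g (1 - 0) < - k * (1 - t) - - k * 0).
  { apply (incr_lt_of_deriv_lt (fun s => g (1 - s)) (fun s => - k * s)
      (fun s => g' (1 - s) * (0 - 1)) (fun _ => - k)); try lra.
    - intros x Hx.
      apply (derivable_pt_lim_comp (fun s => 1 - s) g).
      + apply derivable_pt_lim_minus; [apply derivable_pt_lim_const | apply derivable_pt_lim_id].
      + apply Hd. lra.
    - intros x _. apply derivable_pt_lim_linear.
    - intros x Hx. assert (g' t < g' (1 - x)) by (apply Hinc; lra). unfold k. lra.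
    - exact H1.
    - apply right_cont_scal, right_cont_id. }
  replace (1 - (1 - t)) with t in Hright by ring. rewrite Rminus_0_r in Hright.
  nra.
Qed.

(** * Calculus in two variables *)

Lemma mvt_abs_bound f f' x u K e :
  (forall z, Rabs (z - x) <= Rabs (u - x) -> derivable_pt_lim f z (f' z)) ->
  (forall z, Rabs (z - x) <= Rabs (u - x) -> Rabs (f' z - K) <= e) ->
  Rabs (f u - f x - K * (u - x)) <= e * Rabs (u - x).
Proof.
  intros Hd Hb.
  destruct (Rtotal_order x u) as [Hxu|[<-|Hux]].
  - assert (Hin : forall z, x <= z <= u -> Rabs (z - x) <= Rabs (u - x))
      by (intros z Hz; rewrite !Rabs_right; lra).
    destruct (MVT_cor2 f f' x u Hxu) as [c [Hc Hcin]]; [intros; apply Hd, Hin; lra|].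
    rewrite Hc. replace (f' c * (u - x) - K * (u - x)) with ((f' c - K) * (u - x)) by ring.
    rewrite Rabs_mult. apply Rmult_le_compat_r; [apply Rabs_pos | apply Hb, Hin; lra].
  - rewrite !Rminus_diag, Rmult_0_r, Rminus_0_r, Rabs_R0. lra.
  - assert (Hin : forall z, u <= z <= x -> Rabs (z - x) <= Rabs (u - x))
      by (intros z Hz; rewrite !Rabs_left1; lra).
    destruct (MVT_cor2 f f' u x Hux) as [c [Hc Hcin]]; [intros; apply Hd, Hin; lra|].
    replace (f u - f x - K * (u - x)) with ((f' c - K) * (u - x)) by lra.
    rewrite Rabs_mult. apply Rmult_le_compat_r; [apply Rabs_pos | apply Hb, Hin; lra].
Qed.

(* MVT in the first variable, plain differentiability in the second at the base point. *)
Lemma differentiable_of_partials (f f1 f2 : R -> R -> R) x y :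
  locally_2d (fun u v => derivable_pt_lim (fun z => f z v) u (f1 u v)) x y ->
  continuity_2d_pt f1 x y ->
  derivable_pt_lim (fun z => f x z) y (f2 x y) ->
  differentiable_pt_lim f x y (f1 x y) (f2 x y).
Proof.
  intros [d1 Hd1] Hc Hd2 eps.
  assert (He2 : 0 < eps / 2) by (pose proof (cond_pos eps); lra).
  destruct (Hc (mkposreal _ He2)) as [d2 Hc2]. simpl in Hc2.
  destruct (Hd2 (eps / 2) He2) as [d3 Hd3].
  assert (Hd : 0 < Rmin d1 (Rmin d2 d3)).
  { apply Rmin_pos; [apply cond_pos | apply Rmin_pos; apply cond_pos]. }
  exists (mkposreal _ Hd). intros u v Hu Hv. simpl in Hu, Hv.
  assert (Hm1 := Rmin_l d1 (Rmin d2 d3)). assert (Hm2 := Rmin_r d1 (Rmin d2 d3)).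
  assert (Hm3 := Rmin_l d2 d3). assert (Hm4 := Rmin_r d2 d3).
  assert (Hfirst : Rabs (f u v - f x v - f1 x y * (u - x)) <= eps / 2 * Rabs (u - x)).
  { apply (mvt_abs_bound (fun z => f z v) (fun z => f1 z v)); intros z Hz.
    - apply Hd1; lra.
    - left. apply Hc2; lra. }
  assert (Hsecond : Rabs (f x v - f x y - f2 x y * (v - y)) <= eps / 2 * Rabs (v - y)).
  { destruct (Req_dec v y) as [->|Hvy].
    - rewrite !Rminus_diag, Rmult_0_r, Rminus_0_r, Rabs_R0. lra.
    - specialize (Hd3 (v - y) ltac:(lra) ltac:(lra)).
      replace (y + (v - y)) with v in Hd3 by ring.
      replace (f x v - f x y - f2 x y * (v - y))
        with (((f x v - f x y) / (v - y) - f2 x y) * (v - y)) by (field; lra).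
      rewrite Rabs_mult. apply Rmult_le_compat_r; [apply Rabs_pos | lra]. }
  replace (f u v - f x y - (f1 x y * (u - x) + f2 x y * (v - y))) with
    ((f u v - f x v - f1 x y * (u - x)) + (f x v - f x y - f2 x y * (v - y))) by ring.
  eapply Rle_trans; [apply Rabs_triang|].
  assert (Rabs (u - x) <= Rmax (Rabs (u - x)) (Rabs (v - y))) by apply Rmax_l.
  assert (Rabs (v - y) <= Rmax (Rabs (u - x)) (Rabs (v - y))) by apply Rmax_r.
  pose proof (cond_pos eps). nra.
Qed.

(** * Power bounds *)

Lemma pw_pos r a : 0 < r -> pw r a = Rpower r a.
Proof. intros Hr. unfold pw. destruct (Rle_dec r 0); [lra | reflexivity]. Qed.

Lemma pw_0 a : a <> 0 -> pw 0 a = 0.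
Proof.
  intros Ha. unfold pw. destruct (Rle_dec 0 0); [|lra].
  destruct (Req_EM_T a 0); [lra | reflexivity].
Qed.

Lemma pw_derivable a x : 0 < x ->
  derivable_pt_lim (fun r => pw r a) x (a * pw x (a - 1)).
Proof.
  intros Hx. rewrite pw_pos by exact Hx.
  apply (derivable_pt_lim_locally_ext (fun r => Rpower r a) _ x (x / 2) (2 * x));
    [lra | | apply derivable_pt_lim_power; exact Hx].
  intros y Hy. symmetry. apply pw_pos. lra.
Qed.

Lemma pw_right_cont0 a : 0 < a -> right_cont (fun r => pw r a) 0.
Proof.
  intros Ha. apply filterlim_locally. intros eps.
  exists (mkposreal (Rpower eps (/ a)) (exp_pos _)). intros y Hy Hy0.
  change (Rabs (y - 0) < Rpower eps (/ a)) in Hy.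
  change (Rabs (pw y a - pw 0 a) < eps).
  rewrite Rminus_0_r, Rabs_right in Hy by lra.
  rewrite pw_0, Rminus_0_r, pw_pos, Rabs_right by (try apply Rle_ge, Rlt_le, exp_pos; lra).
  replace (pos eps) with (Rpower (Rpower eps (/ a)) a).
  - apply Rlt_Rpower_l; lra.
  - rewrite Rpower_mult, Rinv_l, Rpower_1 by (try apply cond_pos; lra). reflexivity.
Qed.

Lemma scaled_pw_derivable c a x : 0 < x -> 0 <= a ->
  derivable_pt_lim (fun r => c / (a + 1) * pw r (a + 1)) x (c * pw x a).
Proof.
  intros Hx Ha. eapply dpl_value; [apply dpl_scal, pw_derivable, Hx|].
  replace (a + 1 - 1) with a by ring. field. lra.
Qed.

Lemma power_bounds_of_deriv_bounds f f' c C a r : 0 <= a -> 0 <= r ->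
  f 0 = 0 -> right_cont f 0 -> (forall x, 0 < x <= r -> derivable_pt_lim f x (f' x)) ->
  (forall x, 0 < x < r -> c * pw x a <= f' x <= C * pw x a) ->
  c / (a + 1) * pw r (a + 1) <= f r <= C / (a + 1) * pw r (a + 1).
Proof.
  intros Ha Hr Hf0 Hrc Hd Hb.
  assert (Hpw0 : forall k, k / (a + 1) * pw 0 (a + 1) = 0)
    by (intros k; rewrite pw_0 by lra; ring).
  assert (Hpw : forall k, right_cont (fun x => k / (a + 1) * pw x (a + 1)) 0)
    by (intros k; apply right_cont_scal, pw_right_cont0; lra).
  split.
  - enough (c / (a + 1) * pw r (a + 1) - c / (a + 1) * pw 0 (a + 1) <= f r - f 0)
      by (rewrite Hpw0, Hf0 in *; lra).
    apply (incr_le_of_deriv_le (fun x => c / (a + 1) * pw x (a + 1)) f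
             (fun x => c * pw x a) f'); auto.
    + intros x Hx. apply scaled_pw_derivable; lra.
    + intros x Hx. apply Hb, Hx.
  - enough (f r - f 0 <= C / (a + 1) * pw r (a + 1) - C / (a + 1) * pw 0 (a + 1))
      by (rewrite Hpw0, Hf0 in *; lra).
    apply (incr_le_of_deriv_le f (fun x => C / (a + 1) * pw x (a + 1))
             f' (fun x => C * pw x a)); auto.
    + intros x Hx. apply scaled_pw_derivable; lra.
    + intros x Hx. apply Hb, Hx.
Qed.

(** * The quadrant *)

Lemma dist2_le_abs_sum p q : dist2 p q <= Rabs (fst p - fst q) + Rabs (snd p - snd q).
Proof.
  unfold dist2. set (A := fst p - fst q). set (B := snd p - snd q).
  pose proof (Rabs_pos A). pose proof (Rabs_pos B).
  rewrite <- (sqrt_pow2 (Rabs A + Rabs B)) by lra. apply sqrt_le_1_alt.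
  rewrite <- (pow2_abs A), <- (pow2_abs B). nra.
Qed.

Lemma list_uniform_bounds {A : Type} (d L : A -> R) (l : list A) :
  (forall t, 0 < d t) ->
  exists rho Lmax, 0 < rho /\ 0 <= Lmax /\
    forall t, In t l -> rho <= d t /\ L t <= Lmax.
Proof.
  intros Hd. induction l as [|a l [rho [Lmax [Hrho [HL Hl]]]]].
  - exists 1, 0. split; [lra|]. split; [lra|]. intros t [].
  - exists (Rmin (d a) rho), (Rmax (L a) Lmax).
    split; [now apply Rmin_pos|]. split; [eapply Rle_trans; [exact HL | apply Rmax_r]|].
    intros t [<-|Ht]; split.
    + apply Rmin_l.
    + apply Rmax_l.
    + eapply Rle_trans; [apply Rmin_r | apply Hl, Ht].
    + eapply Rle_trans; [apply Hl, Ht | apply Rmax_r].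
Qed.

(* Cover the box by finitely many balls of quarter Lipschitz radius (compactness): two
   rho-close points of the box then lie in one Lipschitz ball. *)
Lemma loc_lipschitz_uniform_on_box T A : loc_lipschitz_quad T ->
  exists rho L, 0 < rho /\ 0 <= L /\ forall u v,
    0 <= fst u <= A -> 0 <= snd u <= A -> 0 <= fst v <= A -> 0 <= snd v <= A ->
    Rabs (fst u - fst v) < rho -> Rabs (snd u - snd v) < rho ->
    Rabs (T u - T v) <= L * (Rabs (fst u - fst v) + Rabs (snd u - snd v)).
Proof.
  intros HL.
  set (pt := fun t : Compactness.Tn 2 R => (fst t, fst (snd t))).
  destruct (choice (fun t (dl : posreal * R) => quad (pt t) -> forall v w,
      quad v -> quad w -> dist2 v (pt t) < 4 * fst dl -> dist2 w (pt t) < 4 * fst dl ->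
      Rabs (T v - T w) <= snd dl * dist2 v w)) as [dl Hdl].
  { intros t. destruct (classic (quad (pt t))) as [Hq|Hq].
    - destruct (HL _ Hq) as [d [L [Hd Hlip]]].
      exists (mkposreal (d / 4) ltac:(lra), L). intros _ v w Hv Hw Hvd Hwd.
      apply Hlip; simpl in *; auto; lra.
    - exists (mkposreal 1 Rlt_0_1, 0). tauto. }
  apply NNPP. intro Hno.
  apply (compactness_list 2 (0, (0, tt)) (A, (A, tt)) (fun t => fst (dl t))).
  intros [l Hl]. apply Hno. clear Hno.
  destruct (list_uniform_bounds (fun t => pos (fst (dl t))) (fun t => snd (dl t)) l)
    as [rho [L [Hrho [HL0 Hbnd]]]]; [intros; apply cond_pos|].
  exists rho, L. split; [exact Hrho|]. split; [exact HL0|].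
  intros u v Hu1 Hu2 Hv1 Hv2 H1 H2.
  destruct (Hl (fst u, (snd u, tt))) as [t [Ht [Htbox Hclose]]]; [simpl; tauto|].
  destruct t as [t1 [t2 []]]. simpl in Htbox, Hclose.
  destruct Htbox as [Ht1 [Ht2 _]]. destruct Hclose as [Hc1 [Hc2 _]].
  destruct (Hbnd _ Ht) as [Hrd HLt]. simpl in Hrd, HLt.
  set (d := pos (fst (dl (t1, (t2, tt))))) in *.
  assert (Hu : dist2 u (t1, t2) < 4 * d).
  { pose proof (dist2_le_abs_sum u (t1, t2)). simpl in *. lra. }
  assert (Hv : dist2 v (t1, t2) < 4 * d).
  { apply Rabs_lt_between' in H1, H2, Hc1, Hc2.
    assert (Rabs (fst v - t1) < 2 * d) by (apply Rabs_lt_between'; lra).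
    assert (Rabs (snd v - t2) < 2 * d) by (apply Rabs_lt_between'; lra).
    pose proof (dist2_le_abs_sum v (t1, t2)). simpl in *. lra. }
  assert (Hlip := Hdl (t1, (t2, tt)) ltac:(split; simpl; lra) u v
                    ltac:(split; lra) ltac:(split; lra) Hu Hv).
  pose proof (dist2_le_abs_sum u v). assert (0 <= dist2 u v) by apply sqrt_pos.
  assert (snd (dl (t1, (t2, tt))) * dist2 u v <= L * dist2 u v)
    by (apply Rmult_le_compat_r; assumption).
  assert (L * dist2 u v <= L * (Rabs (fst u - fst v) + Rabs (snd u - snd v)))
    by (apply Rmult_le_compat_l; assumption).
  lra.
Qed.

Definition seg (a b s : R) : R := s * b + (1 - s) * a.

Lemma seg_derivable a b s : derivable_pt_lim (seg a b) s (b - a).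
Proof.
  unfold seg. eapply dpl_value.
  - apply dpl_plus; apply dpl_mult.
    + apply derivable_pt_lim_id.
    + apply derivable_pt_lim_const.
    + apply dpl_minus; [apply derivable_pt_lim_const | apply derivable_pt_lim_id].
    + apply derivable_pt_lim_const.
  - cbv beta. ring.
Qed.

Lemma seg_nonneg a b s : 0 <= a -> 0 <= b -> 0 <= s <= 1 -> 0 <= seg a b s.
Proof. intros Ha Hb Hs. unfold seg. nra. Qed.

Lemma seg_pos a b s : 0 <= a -> 0 <= b -> 0 < s < 1 -> (0 < a \/ 0 < b) -> 0 < seg a b s.
Proof. intros Ha Hb Hs [H|H]; unfold seg; nra. Qed.

Lemma seg_flip a b s : seg a b (1 - s) = seg b a s.
Proof. unfold seg. ring. Qed.

Lemma interior_nonneg x : 0 < x -> exists d, 0 < d /\ forall y, Rabs (y - x) < d -> nonneg y.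
Proof.
  intros Hx. exists x. split; [exact Hx|]. intros y Hy.
  apply Rabs_def2 in Hy. unfold nonneg. lra.
Qed.

Lemma locally_2d_of_pos (P : R -> R -> Prop) x y : 0 < x -> 0 < y ->
  (forall u v, 0 < u -> 0 < v -> P u v) -> locally_2d P x y.
Proof.
  intros Hx Hy HP. exists (mkposreal _ (Rmin_pos x y Hx Hy)). intros u v Hu Hv.
  simpl in Hu, Hv. assert (H1 := Rmin_l x y). assert (H2 := Rmin_r x y).
  apply Rabs_def2 in Hu. apply Rabs_def2 in Hv. apply HP; lra.
Qed.

Lemma locally_pos u : 0 < u -> locally u (fun z => 0 < z).
Proof.
  intros Hu. exists (mkposreal u Hu). intros z Hz. change (Rabs (z - u) < u) in Hz.
  apply Rabs_def2 in Hz. lra.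
Qed.

Lemma continuity_2d_pt_comp_sep (g : R -> R -> R) f1 f2 x y :
  continuity_pt f1 x -> continuity_pt f2 y -> continuity_2d_pt g (f1 x) (f2 y) ->
  continuity_2d_pt (fun u v => g (f1 u) (f2 v)) x y.
Proof.
  intros H1 H2 Hg eps. destruct (Hg eps) as [d Hd].
  apply continuity_pt_filterlim in H1, H2.
  destruct (proj1 (filterlim_locally _ _) H1 d) as [d1 Hd1].
  destruct (proj1 (filterlim_locally _ _) H2 d) as [d2 Hd2].
  exists (mkposreal _ (Rmin_pos d1 d2 (cond_pos d1) (cond_pos d2))). intros u v Hu Hv.
  simpl in Hu, Hv. assert (Hm1 := Rmin_l d1 d2). assert (Hm2 := Rmin_r d1 d2).
  apply Hd; [apply (Hd1 u) | apply (Hd2 v)];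
    [change (Rabs (u - x) < d1) | change (Rabs (v - y) < d2)]; lra.
Qed.

Lemma upd_coord i p : upd i p (coord i p) = p.
Proof. now destruct i, p. Qed.

Lemma quad_upd i p x : quad p -> 0 <= x -> quad (upd i p x).
Proof. intros [H1 H2] Hx. now destruct i; split. Qed.

Lemma quad_coord i p : quad p -> 0 <= coord i p.
Proof. intros [H1 H2]. now destruct i. Qed.

Lemma upd_0_on_axis i p : fst (upd i p 0) = 0 \/ snd (upd i p 0) = 0.
Proof. destruct i; simpl; auto. Qed.

Lemma partial_derivable_line i g p s l : quad p -> 0 < s ->
  is_partial_quad i g (upd i p s) l -> derivable_pt_lim (fun x => g (upd i p x)) s l.
Proof.
  intros Hp Hs Hd.
  apply (derivable_of_deriv_within (fun x => quad (upd i p x))).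
  - exists s. split; [exact Hs|]. intros y Hy. apply quad_upd; [exact Hp|].
    apply Rabs_def2 in Hy. lra.
  - destruct i; exact Hd.
Qed.

Lemma continuity_pt_of_cont_nonneg f x : 0 < x -> cont_nonneg f x -> continuity_pt f x.
Proof.
  intros Hx Hf. apply continuity_pt_filterlim. intros P HP.
  destruct (Hf P HP) as [d Hd].
  exists (mkposreal _ (Rmin_pos d x (cond_pos d) Hx)). intros y Hy.
  change (Rabs (y - x) < Rmin d x) in Hy.
  assert (Hd1 := Rmin_l d x). assert (Hd2 := Rmin_r d x).
  apply Hd; [change (Rabs (y - x) < d); lra|].
  apply Rabs_def2 in Hy. unfold nonneg. lra.
Qed.

Lemma cont_quad_right_cont_upd g i p a : quad p -> 0 <= a ->
  cont_quad g (upd i p a) -> right_cont (fun x => g (upd i p x)) a.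
Proof.
  intros Hp Ha Hc. eapply filterlim_comp; [|exact Hc].
  intros P [eps He]. exists eps. intros x Hx Hax. apply He.
  - destruct i; split; simpl; try apply ball_center; exact Hx.
  - apply quad_upd; [exact Hp | lra].
Qed.

Lemma cont_quad_right_cont_seg g p q : quad p -> quad q -> cont_quad g q ->
  right_cont (fun s => g (seg (fst q) (fst p) s, seg (snd q) (snd p) s)) 0.
Proof.
  intros [Hp1 Hp2] [Hq1 Hq2] Hc.
  assert (Hq0 : (seg (fst q) (fst p) 0, seg (snd q) (snd p) 0) = q)
    by (unfold seg; destruct q; simpl; f_equal; ring).
  unfold right_cont. cbv beta. rewrite Hq0. eapply filterlim_comp; [|exact Hc].
  intros P [eps He].
  assert (HD1 := Rabs_pos (fst p - fst q)). assert (HD2 := Rabs_pos (snd p - snd q)).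
  set (D := Rabs (fst p - fst q) + Rabs (snd p - snd q) + 1).
  assert (HD : 0 < D) by (unfold D; lra).
  assert (HDp1 : Rabs (fst p - fst q) <= D) by (unfold D; lra).
  assert (HDp2 : Rabs (snd p - snd q) <= D) by (unfold D; lra).
  assert (Hd : 0 < Rmin 1 (eps / D)) by (apply Rmin_pos; [lra | apply Rdiv_lt_0_compat;
                                          [apply cond_pos | exact HD]]).
  exists (mkposreal _ Hd). intros s Hs Hs0. change (Rabs (s - 0) < Rmin 1 (eps / D)) in Hs.
  rewrite Rminus_0_r, Rabs_right in Hs by lra.
  assert (Hs1 := Rmin_l 1 (eps / D)). assert (Hs2 := Rmin_r 1 (eps / D)).
  assert (HsD : s * D < eps).
  { apply Rlt_le_trans with (eps / D * D); [apply Rmult_lt_compat_r; lra|].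
    right. field. lra. }
  assert (Hk : forall a b, Rabs (b - a) <= D -> Rabs (seg a b s - a) < eps).
  { intros a b Hab. unfold seg.
    replace (s * b + (1 - s) * a - a) with (s * (b - a)) by ring.
    rewrite Rabs_mult, Rabs_right by lra.
    apply Rle_lt_trans with (s * D); [apply Rmult_le_compat_l; lra | exact HsD]. }
  apply He.
  - split; apply Hk; assumption.
  - split; apply seg_nonneg; simpl; lra.
Qed.

Lemma cont_quad_interior g x y : 0 < x -> 0 < y -> cont_quad g (x, y) ->
  continuity_2d_pt (fun u v => g (u, v)) x y.
Proof.
  intros Hx Hy Hc eps. destruct (Hc _ (locally_ball (g (x, y)) eps)) as [d Hd].
  assert (Hm : 0 < Rmin d (Rmin x y)) by (repeat apply Rmin_pos; auto; apply cond_pos).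
  exists (mkposreal _ Hm). intros u v Hu Hv. simpl in Hu, Hv.
  assert (H1 := Rmin_l d (Rmin x y)). assert (H2 := Rmin_r d (Rmin x y)).
  assert (H3 := Rmin_l x y). assert (H4 := Rmin_r x y).
  apply (Hd (u, v)); [split; [change (Rabs (u - x) < d) | change (Rabs (v - y) < d)]; lra|].
  apply Rabs_def2 in Hu. apply Rabs_def2 in Hv. split; simpl; lra.
Qed.

Lemma cont_quad_of_loc_lipschitz g p : loc_lipschitz_quad g -> quad p -> cont_quad g p.
Proof.
  intros HL Hp. destruct (HL p Hp) as [d [L [Hd Hlip]]].
  apply filterlim_locally. intros eps.
  set (e := Rmin (d / 2) (eps / (2 * (Rabs L + 1)))).
  assert (HL1 : 0 < Rabs L + 1) by (pose proof (Rabs_pos L); lra).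
  assert (He : 0 < e).
  { apply Rmin_pos; [lra | apply Rdiv_lt_0_compat; [apply cond_pos | lra]]. }
  assert (He1 := Rmin_l (d / 2) (eps / (2 * (Rabs L + 1)))).
  assert (He2 := Rmin_r (d / 2) (eps / (2 * (Rabs L + 1)))). fold e in He1, He2.
  exists (mkposreal _ He). intros [v1 v2] [Hv1 Hv2] Hv.
  change (Rabs (g (v1, v2) - g p) < eps).
  change (Rabs (v1 - fst p) < e) in Hv1. change (Rabs (v2 - snd p) < e) in Hv2.
  set (v := (v1, v2)) in *.
  assert (Hpp : dist2 p p = 0).
  { unfold dist2. rewrite !Rminus_diag. replace (0 ^ 2 + 0 ^ 2) with 0 by ring. apply sqrt_0. }
  assert (Hvp := dist2_le_abs_sum v p). assert (Hvp0 : 0 <= dist2 v p) by apply sqrt_pos.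
  simpl in Hvp.
  specialize (Hlip v p Hv Hp ltac:(lra) ltac:(lra)).
  assert (L * dist2 v p <= (Rabs L + 1) * dist2 v p)
    by (apply Rmult_le_compat_r; [lra | pose proof (Rle_abs L); lra]).
  assert ((Rabs L + 1) * dist2 v p < (Rabs L + 1) * (2 * e))
    by (apply Rmult_lt_compat_l; lra).
  assert ((Rabs L + 1) * (2 * e) <= eps).
  { apply Rle_trans with ((Rabs L + 1) * (2 * (eps / (2 * (Rabs L + 1))))).
    - apply Rmult_le_compat_l; lra.
    - right. field. lra. }
  lra.
Qed.

Lemma convex_of_strictly_convex f : strictly_convex_quad f -> convex_quad f.
Proof.
  intros Hf p q t Hp Hq Ht.
  destruct (classic (p = q)) as [<-|Hpq].
  { replace (comb t p p) with p by (unfold comb; destruct p; f_equal; simpl; ring). lra. }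
  destruct (Req_dec t 0) as [->|Ht0].
  { replace (comb 0 p q) with q by (unfold comb; destruct q; f_equal; simpl; ring). lra. }
  destruct (Req_dec t 1) as [->|Ht1].
  { replace (comb 1 p q) with p by (unfold comb; destruct p; f_equal; simpl; ring). lra. }
  left. apply Hf; auto. lra.
Qed.

(** * The profiles F_j *)

Section Profile.

Context {F dF d2F : R -> R} {m M beta r0 : R} (HF : HypF F dF d2F m M beta r0).

Lemma F_derivable r : 0 < r -> derivable_pt_lim F r (dF r).
Proof.
  intros Hr. apply (derivable_of_deriv_within nonneg); [now apply interior_nonneg|].
  apply HF. lra.
Qed.

Lemma dF_derivable r : 0 < r -> derivable_pt_lim dF r (d2F r).
Proof.
  intros Hr. apply (derivable_of_deriv_within nonneg); [now apply interior_nonneg|].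
  apply HF. lra.
Qed.

Lemma F_cont_nonneg a : 0 <= a -> cont_nonneg F a.
Proof. intros Ha. apply (cont_within_of_deriv_within nonneg F a (dF a)). now apply HF. Qed.

Lemma F_right_cont a : 0 <= a -> right_cont F a.
Proof.
  intros Ha. apply (right_cont_of_cont_within nonneg); [|now apply F_cont_nonneg].
  intros y Hy. unfold nonneg. lra.
Qed.

Lemma dF_right_cont a : 0 <= a -> right_cont dF a.
Proof.
  intros Ha. apply (right_cont_of_cont_within nonneg).
  - intros y Hy. unfold nonneg. lra.
  - apply (cont_within_of_deriv_within nonneg dF a (d2F a)). now apply HF.
Qed.

Lemma d2F_pos r : 0 < r -> 0 < d2F r.
Proof. apply HF. Qed.

Lemma F_0 : F 0 = 0.
Proof. apply HF. Qed.

Lemma dF_0 : dF 0 = 0.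
Proof. apply HF. Qed.

Lemma F_nonneg r : 0 <= r -> 0 <= F r.
Proof. apply HF. Qed.

Lemma dF_lt a b : 0 <= a < b -> dF a < dF b.
Proof.
  intros Hab. apply (lt_of_deriv_pos dF d2F); [lra | | | apply dF_right_cont; lra].
  - intros x Hx. apply dF_derivable. lra.
  - intros x Hx. apply d2F_pos. lra.
Qed.

Lemma dF_le a b : 0 <= a <= b -> dF a <= dF b.
Proof.
  intros Hab. destruct (Req_dec a b) as [<-|Hne]; [lra|].
  left. apply dF_lt. lra.
Qed.

Lemma dF_pos r : 0 < r -> 0 < dF r.
Proof. intros Hr. rewrite <- dF_0. apply dF_lt. lra. Qed.

Lemma dF_nonneg r : 0 <= r -> 0 <= dF r.
Proof. intros Hr. rewrite <- dF_0. apply dF_le. lra. Qed.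

Lemma F_pos r : 0 < r -> 0 < F r.
Proof.
  intros Hr. rewrite <- F_0.
  apply (lt_of_deriv_pos F dF); [lra | | | apply F_right_cont; lra].
  - intros x Hx. apply F_derivable. lra.
  - intros x Hx. apply dF_pos. lra.
Qed.

Lemma finv_dF r : 0 <= r -> finv dF (dF r) = r.
Proof.
  intros Hr. unfold finv.
  destruct (epsilon_spec (inhabits 0) (fun x => 0 <= x /\ dF x = dF r))
    as [Hx Heq]; [now exists r|].
  set (x := epsilon _ _) in *.
  destruct (Rtotal_order x r) as [Hlt|[Heq'|Hgt]]; [|exact Heq'|].
  - pose proof (dF_lt x r). lra.
  - pose proof (dF_lt r x). lra.
Qed.

Lemma bregman_nonneg r rb : 0 <= r -> 0 <= rb -> 0 <= bregman F dF r rb.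
Proof.
  intros Hr Hrb. unfold bregman.
  assert (Hlin : forall x, derivable_pt_lim (fun y => dF rb * y) x (dF rb))
    by (intros; apply derivable_pt_lim_linear).
  assert (Hlinc : right_cont (fun y => dF rb * y) r /\ right_cont (fun y => dF rb * y) rb)
    by (split; apply right_cont_scal, right_cont_id).
  destruct (Rle_or_lt rb r) as [Hle|Hlt].
  - enough (dF rb * r - dF rb * rb <= F r - F rb) by lra.
    apply (incr_le_of_deriv_le _ F (fun _ => dF rb) dF); auto; try apply Hlinc.
    + intros x Hx. apply F_derivable. lra.
    + intros x Hx. apply dF_le. lra.
    + apply F_right_cont, Hrb.
  - enough (F rb - F r <= dF rb * rb - dF rb * r) by lra.
    apply (incr_le_of_deriv_le F _ dF (fun _ => dF rb)); auto; try apply Hlinc.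
    + lra.
    + intros x Hx. apply F_derivable. lra.
    + intros x Hx. apply dF_le. lra.
    + apply F_right_cont, Hr.
Qed.

Lemma dF_F_power_bounds r : 0 <= r <= r0 ->
  (m / (beta + 1) * pw r (beta + 1) <= dF r <= M / (beta + 1) * pw r (beta + 1)) /\
  (m / ((beta + 1) * (beta + 2)) * pw r (beta + 2) <= F r <=
   M / ((beta + 1) * (beta + 2)) * pw r (beta + 2)).
Proof.
  intros Hr.
  assert (Hb : 0 <= beta) by apply HF.
  assert (HdF : forall y, 0 <= y <= r0 ->
    m / (beta + 1) * pw y (beta + 1) <= dF y <= M / (beta + 1) * pw y (beta + 1)).
  { intros y Hy. apply (power_bounds_of_deriv_bounds dF d2F); try lra.
    - apply dF_0.
    - apply dF_right_cont. lra.
    - intros x Hx. apply dF_derivable. lra.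
    - intros x Hx. apply HF. lra. }
  split; [now apply HdF|].
  replace (beta + 2) with (beta + 1 + 1) by ring.
  replace (m / ((beta + 1) * (beta + 1 + 1))) with (m / (beta + 1) / (beta + 1 + 1))
    by (field; lra).
  replace (M / ((beta + 1) * (beta + 1 + 1))) with (M / (beta + 1) / (beta + 1 + 1))
    by (field; lra).
  apply (power_bounds_of_deriv_bounds F dF); try lra.
  - apply F_0.
  - apply F_right_cont. lra.
  - intros x Hx. apply F_derivable. lra.
  - intros x Hx. apply HdF. lra.
Qed.

Lemma d2F_bounded_on B : 0 <= B -> exists L, 0 < L /\ forall x, 0 <= x <= B -> d2F x <= L.
Proof.
  intros HB.
  destruct (continuity_ab_maj (fun x => d2F (Rmax 0 x)) 0 B HB) as [xm [Hxm _]].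
  { intros c Hc. apply continuity_pt_clamp; [lra|]. apply HF. lra. }
  exists (Rabs (d2F (Rmax 0 xm)) + 1). split; [pose proof (Rabs_pos (d2F (Rmax 0 xm))); lra|].
  intros x Hx. specialize (Hxm x Hx). rewrite (Rmax_right 0 x) in Hxm by lra.
  pose proof (Rle_abs (d2F (Rmax 0 xm))). lra.
Qed.

Lemma d2F_min_pos_on a B : 0 < a <= B -> exists c, 0 < c /\ forall x, a <= x <= B -> c <= d2F x.
Proof.
  intros HaB.
  destruct (continuity_ab_min (fun x => d2F (Rmax 0 x)) a B) as [xm [Hxm Hxmin]]; [lra| |].
  { intros c Hc. apply continuity_pt_clamp; [lra|]. apply HF. lra. }
  rewrite (Rmax_right 0 xm) in Hxm by lra.
  exists (d2F xm). split; [apply d2F_pos; lra|].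
  intros x Hx. specialize (Hxm x Hx). now rewrite (Rmax_right 0 x) in Hxm by lra.
Qed.

Lemma dF_lipschitz_on L a b : 0 <= a <= b -> (forall x, a < x < b -> d2F x <= L) ->
  dF b - dF a <= L * (b - a).
Proof.
  intros Hab HL. replace (L * (b - a)) with (L * b - L * a) by ring.
  apply (incr_le_of_deriv_le dF (fun x => L * x) d2F (fun _ => L)); auto; try lra.
  - intros x Hx. apply dF_derivable. lra.
  - intros x Hx. apply derivable_pt_lim_linear.
  - apply dF_right_cont. lra.
  - apply right_cont_scal, right_cont_id.
Qed.

Lemma dF_abs_diff_le L B r rb : (forall x, 0 <= x <= B -> d2F x <= L) ->
  0 <= r <= B -> 0 <= rb <= B -> Rabs (dF r - dF rb) <= L * Rabs (r - rb).
Proof.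
  intros HL Hr Hrb. destruct (Rle_or_lt rb r) as [Hle|Hlt].
  - assert (dF rb <= dF r) by (apply dF_le; lra).
    rewrite !Rabs_right by lra. apply dF_lipschitz_on; [lra|]. intros x Hx. apply HL. lra.
  - assert (dF r <= dF rb) by (apply dF_le; lra).
    rewrite !Rabs_left1 by lra. rewrite !Ropp_minus_distr.
    apply dF_lipschitz_on; [lra|]. intros x Hx. apply HL. lra.
Qed.

(* Three regimes: dF is Lipschitz near 0, bounded on compacts, and O(F) at infinity. *)
Lemma dF_le_min1_plus_F : exists alpha, forall r, 0 <= r -> dF r <= alpha * (Rmin 1 r + F r).
Proof.
  destruct (d2F_bounded_on 1 ltac:(lra)) as [L [HL HLb]].
  assert (Hlim : exists C R0, forall r, R0 <= r -> dF r / F r <= C) by apply HF.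
  destruct Hlim as [C [R0 HC]].
  set (R1 := Rmax R0 1). assert (HR0 := Rmax_l R0 1). assert (HR1 := Rmax_r R0 1).
  assert (HdR1 : 0 <= dF R1) by (apply dF_nonneg; unfold R1; lra).
  exists (L + dF R1 + Rabs C). intros r Hr.
  assert (HFr := F_nonneg r Hr). assert (HdFr := dF_nonneg r Hr).
  assert (HC0 := Rabs_pos C). pose proof (Rle_abs C).
  destruct (Rle_or_lt r 1) as [Hr1|Hr1]; [|destruct (Rle_or_lt r R1) as [HrR|HrR]].
  - rewrite Rmin_right by lra.
    assert (dF r - dF 0 <= L * (r - 0))
      by (apply dF_lipschitz_on; [lra | intros x Hx; apply HLb; lra]).
    rewrite dF_0 in *. nra.
  - rewrite Rmin_left by lra.
    assert (dF r <= dF R1) by (apply dF_le; lra). nra.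
  - assert (HFp : 0 < F r) by (apply F_pos; lra).
    assert (dF r <= C * F r).
    { specialize (HC r ltac:(unfold R1 in *; lra)).
      apply (Rmult_le_compat_r (F r)) in HC; [|lra].
      unfold Rdiv in HC. rewrite Rmult_assoc, Rinv_l, Rmult_1_r in HC by lra. exact HC. }
    assert (0 <= Rmin 1 r) by (apply Rmin_glb; lra). nra.
Qed.

Lemma dF_gap H del : 0 <= H -> 0 < del ->
  exists g, 0 < g /\ forall x, 0 <= x <= H -> g <= dF (x + del) - dF x.
Proof.
  intros HH Hdel.
  destruct (d2F_min_pos_on (del / 2) (H + del)) as [c [Hc Hcb]]; [lra|].
  exists (c * (del / 2)). split; [nra|]. intros x Hx.
  assert (Hinc : c * (x + del) - c * (x + del / 2) <= dF (x + del) - dF (x + del / 2)).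
  { apply (incr_le_of_deriv_le (fun y => c * y) dF (fun _ => c) d2F); try lra.
    - intros y _. apply derivable_pt_lim_linear.
    - intros y Hy. apply dF_derivable. lra.
    - intros y Hy. apply Hcb. lra.
    - apply right_cont_scal, right_cont_id.
    - apply dF_right_cont. lra. }
  assert (dF x <= dF (x + del / 2)) by (apply dF_le; lra).
  lra.
Qed.

Lemma F_minus_linear_derivable c x : 0 < x ->
  derivable_pt_lim (fun y => F y - c * y) x (dF x - c).
Proof.
  intros Hx. apply dpl_minus; [now apply F_derivable | apply derivable_pt_lim_linear].
Qed.

Lemma F_minus_linear_right_cont c a : 0 <= a -> right_cont (fun y => F y - c * y) a.
Proof.
  intros Ha. apply right_cont_minus; [now apply F_right_cont|].
  apply right_cont_scal, right_cont_id.
Qed.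

(* Past rb + del / 2 (resp. before rb - del / 2) the slope of F exceeds (resp. falls
   short of) the tangent slope dF rb by the gap g. *)
Lemma bregman_ge_gap H del g r rb : 0 < del -> 0 <= g -> 0 <= r -> 0 <= rb <= H ->
  del <= Rabs (r - rb) -> (forall x, 0 <= x <= H -> g <= dF (x + del / 2) - dF x) ->
  g * (Rabs (r - rb) / 2) <= bregman F dF r rb.
Proof.
  intros Hdel Hg Hr Hrb Hd Hgap. unfold bregman.
  destruct (Rle_or_lt rb r) as [Hle|Hlt].
  - rewrite Rabs_right in * by lra. set (a := rb + del / 2).
    assert (B0 := bregman_nonneg a rb ltac:(unfold a; lra) ltac:(lra)).
    assert (Hinc : g * r - g * a <= (F r - dF rb * r) - (F a - dF rb * a)).
    { apply (incr_le_of_deriv_le (fun y => g * y) (fun y => F y - dF rb * y)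
        (fun _ => g) (fun y => dF y - dF rb)); unfold a in *; try lra.
      - intros y _. apply derivable_pt_lim_linear.
      - intros y Hy. apply F_minus_linear_derivable. lra.
      - intros y Hy. pose proof (Hgap rb ltac:(lra)).
        pose proof (dF_le (rb + del / 2) y ltac:(lra)). lra.
      - apply right_cont_scal, right_cont_id.
      - apply F_minus_linear_right_cont. lra. }
    unfold bregman, a in *. nra.
  - rewrite Rabs_left in * by lra. set (a := rb - del / 2).
    assert (B0 := bregman_nonneg a rb ltac:(unfold a; lra) ltac:(lra)).
    assert (Hinc : (F a - dF rb * a) - (F r - dF rb * r) <= - g * a - - g * r).
    { apply (incr_le_of_deriv_le (fun y => F y - dF rb * y) (fun y => - g * y)
        (fun y => dF y - dF rb) (fun _ => - g)); unfold a in *; try lra.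
      - intros y Hy. apply F_minus_linear_derivable. lra.
      - intros y _. apply derivable_pt_lim_linear.
      - intros y Hy. pose proof (Hgap (rb - del / 2) ltac:(lra)).
        pose proof (dF_le y (rb - del / 2) ltac:(lra)).
        replace (rb - del / 2 + del / 2) with rb in * by ring. lra.
      - apply F_minus_linear_right_cont. lra.
      - apply right_cont_scal, right_cont_id. }
    unfold bregman, a in *. nra.
Qed.

Lemma bregman_ge_far H del : 0 <= H -> 0 < del ->
  exists c, 0 < c /\ forall r rb, 0 <= r -> 0 <= rb <= H -> del <= Rabs (r - rb) ->
    c * (1 + Rabs (r - rb)) <= bregman F dF r rb.
Proof.
  intros HH Hdel.
  destruct (dF_gap H (del / 2) HH ltac:(lra)) as [g [Hg Hgap]].
  exists (g / (2 * (1 + del)) * del).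
  split; [apply Rmult_lt_0_compat; [apply Rdiv_lt_0_compat|]; lra|].
  intros r rb Hr Hrb Hd.
  eapply Rle_trans; [|exact (bregman_ge_gap H del g r rb Hdel (Rlt_le _ _ Hg) Hr Hrb Hd Hgap)].
  set (x := Rabs (r - rb)) in *.
  assert (Hx : (1 + x) * del <= x * (1 + del)) by nra.
  replace (g / (2 * (1 + del)) * del * (1 + x)) with (g / (2 * (1 + del)) * ((1 + x) * del))
    by ring.
  replace (g * (x / 2)) with (g / (2 * (1 + del)) * (x * (1 + del))) by (field; lra).
  apply Rmult_le_compat_l; [apply Rlt_le, Rdiv_lt_0_compat|]; lra.
Qed.

Lemma dF_diff_sq_le_bregman L B r rb : (forall x, 0 <= x <= B -> d2F x <= L) ->
  0 <= r <= B -> 0 <= rb <= B -> (dF r - dF rb) ^ 2 <= 2 * L * bregman F dF r rb.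
Proof.
  intros HL Hr Hrb.
  set (q := fun y => (dF y - dF rb) * (dF y - dF rb)).
  set (q' := fun y => 2 * (dF y - dF rb) * d2F y).
  set (G := fun y => 2 * L * (F y - dF rb * y)).
  set (G' := fun y => 2 * L * (dF y - dF rb)).
  assert (Dq : forall y, 0 < y -> derivable_pt_lim q y (q' y)).
  { intros y Hy. unfold q, q'. eapply dpl_value.
    - apply dpl_mult; apply dpl_minus;
        (apply derivable_pt_lim_const || apply dF_derivable, Hy).
    - cbv beta. ring. }
  assert (DG : forall y, 0 < y -> derivable_pt_lim G y (G' y)).
  { intros y Hy. apply dpl_scal, F_minus_linear_derivable, Hy. }
  assert (Rq : forall a, 0 <= a -> right_cont q a).
  { intros a Ha. apply right_cont_mult; apply right_cont_minus;
      (apply right_cont_const || apply dF_right_cont, Ha). }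
  assert (RG : forall a, 0 <= a -> right_cont G a).
  { intros a Ha. apply right_cont_scal, F_minus_linear_right_cont, Ha. }
  assert (Hbreg : G r - G rb = 2 * L * bregman F dF r rb) by (unfold G, bregman; ring).
  assert (Hq0 : q rb = 0) by (unfold q; ring).
  replace ((dF r - dF rb) ^ 2) with (q r) by (unfold q; ring).
  destruct (Rle_or_lt rb r) as [Hle|Hlt].
  - enough (q r - q rb <= G r - G rb) by lra.
    apply (incr_le_of_deriv_le q G q' G'); [lra | | | | apply Rq; lra | apply RG; lra];
      try (intros y Hy; apply Dq || apply DG; lra).
    intros y Hy. unfold q', G'.
    pose proof (HL y ltac:(lra)). pose proof (dF_le rb y ltac:(lra)).
    assert (0 <= (dF y - dF rb) * (L - d2F y)) by (apply Rmult_le_pos; lra).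
    lra.
  - enough (G rb - G r <= q rb - q r) by lra.
    apply (incr_le_of_deriv_le G q G' q'); [lra | | | | apply RG; lra | apply Rq; lra];
      try (intros y Hy; apply Dq || apply DG; lra).
    intros y Hy. unfold q', G'.
    pose proof (HL y ltac:(lra)). pose proof (dF_le y rb ltac:(lra)).
    assert (0 <= (dF rb - dF y) * (L - d2F y)) by (apply Rmult_le_pos; lra).
    lra.
Qed.

Lemma F_seg_slope_increasing a b : 0 <= a -> 0 <= b -> a <> b ->
  slope_increasing (fun s => F (seg a b s)).
Proof.
  intros Ha Hb Hab. exists (fun s => dF (seg a b s) * (b - a)). split.
  - intros s Hs. apply (dpl_comp F (seg a b)); [apply seg_derivable|].
    apply F_derivable, seg_pos; [exact Ha | exact Hb | exact Hs | lra].
  - intros s t Hs Hst Ht.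
    assert (Ls : 0 <= seg a b s) by (apply seg_nonneg; lra).
    assert (Lt : 0 <= seg a b t) by (apply seg_nonneg; lra).
    assert (E : seg a b t - seg a b s = (t - s) * (b - a)) by (unfold seg; ring).
    destruct (Rlt_or_le a b) as [Hlt|Hge].
    + assert (seg a b s < seg a b t) by nra.
      pose proof (dF_lt (seg a b s) (seg a b t) ltac:(lra)). nra.
    + assert (seg a b t < seg a b s) by nra.
      pose proof (dF_lt (seg a b t) (seg a b s) ltac:(lra)). nra.
Qed.

End Profile.

(** * The coupling h and the Hessian of F_eps *)

Definition dF_pair (dF : idx -> R -> R) (q : R * R) : R * R := (dF I1 (fst q), dF I2 (snd q)).

Lemma dF_pair_upd dF i p x : dF_pair dF (upd i p x) = upd i (dF_pair dF p) (dF i x).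
Proof. now destruct i. Qed.

Definition kappa_sum (kappa : idx -> idx -> R) : R :=
  kappa I1 I1 + kappa I1 I2 + kappa I2 I1 + kappa I2 I2.

Lemma quadratic_form_lower_bound a b D11 D22 X k11 k12 k21 k22 eps w1 w2 :
  0 <= a -> 0 <= b -> 0 <= k11 -> 0 <= k22 -> 0 <= k12 -> 0 <= k21 -> 0 <= eps ->
  eps * (4 * (k11 + k12 + k21 + k22)) <= 1 ->
  Rabs D11 <= k11 * a -> Rabs D22 <= k22 * b -> X ^ 2 <= k12 * k21 * a * b ->
  (a * w1 ^ 2 + b * w2 ^ 2) / 2 <=
  a * w1 ^ 2 + b * w2 ^ 2 + 2 * eps * (D11 * w1 ^ 2 + 2 * X * w1 * w2 + D22 * w2 ^ 2).
Proof.
  intros Ha Hb H11 H22 H12 H21 He HeK B11 B22 BX.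
  set (A := a * w1 ^ 2). set (B := b * w2 ^ 2).
  assert (HA : 0 <= A) by (apply Rmult_le_pos; [lra | apply pow2_ge_0]).
  assert (HB : 0 <= B) by (apply Rmult_le_pos; [lra | apply pow2_ge_0]).
  set (Z := (k12 + k21) / 2 * ((A + B) / 2)).
  (* 2 |X w1 w2| <= 2 sqrt(k12 k21) sqrt(A B) <= (k12 + k21) (A + B) / 2 by AM-GM twice *)
  assert (Hcross : (X * w1 * w2) ^ 2 <= Z ^ 2).
  { assert (4 * (k12 * k21) <= (k12 + k21) ^ 2) by (pose proof (pow2_ge_0 (k12 - k21)); nra).
    assert (4 * (A * B) <= (A + B) ^ 2) by (pose proof (pow2_ge_0 (A - B)); nra).
    assert ((X * w1 * w2) ^ 2 <= k12 * k21 * (A * B)).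
    { replace ((X * w1 * w2) ^ 2) with (X ^ 2 * (w1 ^ 2 * w2 ^ 2)) by ring.
      replace (k12 * k21 * (A * B)) with (k12 * k21 * a * b * (w1 ^ 2 * w2 ^ 2))
        by (unfold A, B; ring).
      apply Rmult_le_compat_r; [nra | exact BX]. }
    assert (4 * (k12 * k21) * (4 * (A * B)) <= (k12 + k21) ^ 2 * (A + B) ^ 2)
      by (apply Rmult_le_compat; nra).
    unfold Z. nra. }
  assert (HZ : 0 <= Z) by (unfold Z; nra).
  assert (Hcross' : - Z <= X * w1 * w2) by nra.
  apply Rabs_le_between in B11. apply Rabs_le_between in B22.
  assert (T1 : - (k11 * A) <= D11 * w1 ^ 2) by (unfold A; nra).
  assert (T2 : - (k22 * B) <= D22 * w2 ^ 2) by (unfold B; nra).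
  set (K := k11 + k12 + k21 + k22) in *.
  assert (Hbr : - (K * (A + B)) <= D11 * w1 ^ 2 + 2 * X * w1 * w2 + D22 * w2 ^ 2).
  { assert (0 <= k11 * B) by (apply Rmult_le_pos; lra).
    assert (0 <= k22 * A) by (apply Rmult_le_pos; lra).
    assert (0 <= (k12 + k21) * (A + B)) by (apply Rmult_le_pos; lra).
    unfold Z, K in *. lra. }
  assert (eps * (- (K * (A + B))) <= eps * (D11 * w1 ^ 2 + 2 * X * w1 * w2 + D22 * w2 ^ 2))
    by (apply Rmult_le_compat_l; lra).
  assert (eps * (4 * K) * (A + B) <= 1 * (A + B)) by (apply Rmult_le_compat_r; lra).
  lra.
Qed.

Section Pair.

Context {F dF d2F : idx -> R -> R} {m M beta : idx -> R} {r0 : R}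
  {h : R * R -> R} {dh : idx -> R * R -> R} {d2h : idx -> idx -> R * R -> R}
  {Th : idx -> idx -> R * R -> R} {kappa : idx -> idx -> R}
  (HF : forall j, HypF (F j) (dF j) (d2F j) (m j) (M j) (beta j) r0)
  (Hh : Hyph h dh d2h) (HT : HypTheta dF dh Th kappa).

Lemma kappa_pos j i : 0 < kappa j i.
Proof. apply HT. Qed.

Lemma kappa_sum_pos : 0 < kappa_sum kappa.
Proof.
  unfold kappa_sum. pose proof (kappa_pos I1 I1). pose proof (kappa_pos I1 I2).
  pose proof (kappa_pos I2 I1). pose proof (kappa_pos I2 I2). lra.
Qed.

Lemma Th_abs_le_kappa j i u : quad u -> Rabs (Th j i u) <= kappa j i.
Proof.
  intros Hu. destruct HT as [_ [_ [_ Hb]]].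
  eapply Rle_trans; [apply (Hb j i u Hu)|].
  rewrite <- (Rmult_1_r (kappa j i)) at 2.
  apply Rmult_le_compat_l; [apply Rlt_le, kappa_pos|].
  eapply Rle_trans; apply Rmin_l.
Qed.

Lemma quad_dF_pair q : quad q -> quad (dF_pair dF q).
Proof. intros [H1 H2]. split; apply (dF_nonneg (HF _)); assumption. Qed.

Lemma theta_dF_pair j q : quad q -> theta dF dh j (dF_pair dF q) = dh j q.
Proof.
  intros [H1 H2]. unfold theta, dF_pair; simpl.
  rewrite (finv_dF (HF I1)), (finv_dF (HF I2)) by assumption.
  now destruct q.
Qed.

Lemma h_dh_vanish_on_axis q : quad q -> (fst q = 0 \/ snd q = 0) ->
  h q = 0 /\ forall i, dh i q = 0.
Proof.
  intros Hq Hax. destruct Hh as [_ [_ [_ [_ [_ Hz]]]]].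
  destruct (Hz q Hq Hax) as [H0 [H1 H2]]. split; [exact H0|]. now intros [].
Qed.

(* dh j = theta_j o dF_pair on the quadrant: the chain rule through theta. *)
Lemma dh_derivable_coord i j p s : quad p -> 0 < s ->
  derivable_pt_lim (fun x => dh j (upd i p x)) s (Th j i (dF_pair dF (upd i p s)) * d2F i s).
Proof.
  intros Hp Hs. set (u := dF_pair dF p).
  assert (Hu : quad u) by now apply quad_dF_pair.
  apply (derivable_pt_lim_locally_ext (fun x => theta dF dh j (upd i u (dF i x))) _
           s 0 (2 * s)); [lra | |].
  - intros y Hy. unfold u. rewrite <- dF_pair_upd.
    apply theta_dF_pair, quad_upd; [exact Hp | lra].
  - rewrite dF_pair_upd. fold u.
    apply (dpl_comp (fun y => theta dF dh j (upd i u y)) (dF i));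
      [now apply (dF_derivable (HF i))|].
    apply partial_derivable_line; [exact Hu | now apply (dF_pos (HF i))|].
    apply HT, quad_upd; [exact Hu | apply (dF_nonneg (HF i)); lra].
Qed.

Lemma dh_abs_le_kappa_dF i p x : quad p -> 0 <= x ->
  Rabs (dh i (upd i p x)) <= kappa i i * dF i x.
Proof.
  intros Hp Hx.
  apply (abs_le_of_deriv_abs_le (fun y => dh i (upd i p y)) (fun y => kappa i i * dF i y)
           (fun y => Th i i (dF_pair dF (upd i p y)) * d2F i y)
           (fun y => kappa i i * d2F i y) 0 x Hx).
  - intros y Hy. apply dh_derivable_coord; [exact Hp | lra].
  - intros y Hy. apply dpl_scal, (dF_derivable (HF i)). lra.
  - intros y Hy. rewrite Rabs_mult, (Rabs_right (d2F i y))
      by (apply Rle_ge, Rlt_le, (d2F_pos (HF i)); lra).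
    apply Rmult_le_compat_r; [apply Rlt_le, (d2F_pos (HF i)); lra|].
    apply Th_abs_le_kappa, quad_dF_pair, quad_upd; [exact Hp | lra].
  - apply cont_quad_right_cont_upd; [exact Hp | lra |].
    apply Hh, quad_upd; [exact Hp | lra].
  - apply right_cont_scal, (dF_right_cont (HF i)). lra.
  - destruct (h_dh_vanish_on_axis (upd i p 0)) as [_ Hz];
      [apply quad_upd; [exact Hp | lra] | apply upd_0_on_axis|].
    rewrite Hz, (dF_0 (HF i)), Rabs_R0. lra.
Qed.

(* Integrating twice from the axis r_i = 0, where h and dh vanish. *)
Lemma h_abs_le_kappa_F i p : quad p -> Rabs (h p) <= kappa i i * F i (coord i p).
Proof.
  intros Hp. rewrite <- (upd_coord i p) at 1. assert (Hc := quad_coord i p Hp).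
  apply (abs_le_of_deriv_abs_le (fun y => h (upd i p y)) (fun y => kappa i i * F i y)
           (fun y => dh i (upd i p y)) (fun y => kappa i i * dF i y) 0 _ Hc).
  - intros y Hy. apply partial_derivable_line; [exact Hp | lra|].
    apply Hh, quad_upd; [exact Hp | lra].
  - intros y Hy. apply dpl_scal, (F_derivable (HF i)). lra.
  - intros y Hy. apply dh_abs_le_kappa_dF; [exact Hp | lra].
  - apply cont_quad_right_cont_upd; [exact Hp | lra |].
    apply Hh, quad_upd; [exact Hp | lra].
  - apply right_cont_scal, (F_right_cont (HF i)). lra.
  - destruct (h_dh_vanish_on_axis (upd i p 0)) as [Hz _];
      [apply quad_upd; [exact Hp | lra] | apply upd_0_on_axis|].
    rewrite Hz, (F_0 (HF i)), Rabs_R0. lra.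
Qed.

Lemma Feps_bounds eps p : 0 < eps -> eps * (4 * kappa_sum kappa) <= 1 -> quad p ->
  / 2 * F I1 (fst p) + / 2 * F I2 (snd p) <= Feps F h eps p /\
  Feps F h eps p <= (1 + eps / 2 * kappa I1 I1) * F I1 (fst p)
                    + (1 + eps / 2 * kappa I2 I2) * F I2 (snd p).
Proof.
  intros He HeK Hp.
  assert (B1 := h_abs_le_kappa_F I1 p Hp). assert (B2 := h_abs_le_kappa_F I2 p Hp).
  cbn [coord] in B1, B2.
  assert (Hb : Rabs (h p) <= (kappa I1 I1 * F I1 (fst p) + kappa I2 I2 * F I2 (snd p)) / 2)
    by lra.
  apply Rabs_le_between in Hb.
  assert (F1 : 0 <= F I1 (fst p)) by (apply (F_nonneg (HF I1)), Hp).
  assert (F2 : 0 <= F I2 (snd p)) by (apply (F_nonneg (HF I2)), Hp).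
  assert (Hk := kappa_pos). unfold kappa_sum in HeK.
  assert (K1 : eps * kappa I1 I1 * F I1 (fst p) <= / 4 * F I1 (fst p)).
  { apply Rmult_le_compat_r; [exact F1|].
    pose proof (Hk I1 I2); pose proof (Hk I2 I1); pose proof (Hk I2 I2); nra. }
  assert (K2 : eps * kappa I2 I2 * F I2 (snd p) <= / 4 * F I2 (snd p)).
  { apply Rmult_le_compat_r; [exact F2|].
    pose proof (Hk I1 I2); pose proof (Hk I2 I1); pose proof (Hk I1 I1); nra. }
  assert (Heh1 : eps * h p <= eps * ((kappa I1 I1 * F I1 (fst p) +
                                      kappa I2 I2 * F I2 (snd p)) / 2))
    by (apply Rmult_le_compat_l; lra).
  assert (Heh2 : eps * - ((kappa I1 I1 * F I1 (fst p) + kappa I2 I2 * F I2 (snd p)) / 2)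
                 <= eps * h p)
    by (apply Rmult_le_compat_l; lra).
  unfold Feps. split; nra.
Qed.

End Pair.

Section Hessian.

Context {F dF d2F : idx -> R -> R} {m M beta : idx -> R} {r0 : R}
  {h : R * R -> R} {dh : idx -> R * R -> R} {d2h : idx -> idx -> R * R -> R}
  {Th : idx -> idx -> R * R -> R} {kappa : idx -> idx -> R}
  (HF : forall j, HypF (F j) (dF j) (d2F j) (m j) (M j) (beta j) r0)
  (Hh : Hyph h dh d2h) (HT : HypTheta dF dh Th kappa).

(* d_{r_i} d_{r_j} h, computed through theta. *)
Definition hess (j i : idx) (P : R * R) : R := Th j i (dF_pair dF P) * d2F i (coord i P).

Lemma h_derivable_fst u v : 0 < u -> 0 < v ->
  derivable_pt_lim (fun t => h (t, v)) u (dh I1 (u, v)).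
Proof.
  intros Hu Hv. assert (Hq : quad (u, v)) by (split; simpl; lra).
  exact (partial_derivable_line I1 h (u, v) u _ Hq Hu (proj1 Hh I1 (u, v) Hq)).
Qed.

Lemma h_derivable_snd u v : 0 < u -> 0 < v ->
  derivable_pt_lim (fun t => h (u, t)) v (dh I2 (u, v)).
Proof.
  intros Hu Hv. assert (Hq : quad (u, v)) by (split; simpl; lra).
  exact (partial_derivable_line I2 h (u, v) v _ Hq Hv (proj1 Hh I2 (u, v) Hq)).
Qed.

Lemma dh_derivable_fst j u v : 0 < u -> 0 < v ->
  derivable_pt_lim (fun t => dh j (t, v)) u (hess j I1 (u, v)).
Proof.
  intros Hu Hv. exact (dh_derivable_coord HF HT I1 j (u, v) u ltac:(split; simpl; lra) Hu).
Qed.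

Lemma dh_derivable_snd j u v : 0 < u -> 0 < v ->
  derivable_pt_lim (fun t => dh j (u, t)) v (hess j I2 (u, v)).
Proof.
  intros Hu Hv. exact (dh_derivable_coord HF HT I2 j (u, v) v ltac:(split; simpl; lra) Hv).
Qed.

Lemma h_differentiable x y : 0 < x -> 0 < y ->
  differentiable_pt_lim (fun u v => h (u, v)) x y (dh I1 (x, y)) (dh I2 (x, y)).
Proof.
  intros Hx Hy.
  apply (differentiable_of_partials _ (fun u v => dh I1 (u, v)) (fun u v => dh I2 (u, v))).
  - apply locally_2d_of_pos; [exact Hx | exact Hy | exact h_derivable_fst].
  - apply cont_quad_interior; [exact Hx | exact Hy|]. apply Hh. split; simpl; lra.
  - now apply h_derivable_snd.
Qed.

Lemma hess_continuous j i x y : 0 < x -> 0 < y ->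
  continuity_2d_pt (fun u v => hess j i (u, v)) x y.
Proof.
  intros Hx Hy. apply continuity_2d_pt_mult.
  - apply (continuity_2d_pt_comp_sep (fun a b => Th j i (a, b)) (dF I1) (dF I2)).
    + apply derivable_continuous_pt. exists (d2F I1 x). now apply (dF_derivable (HF I1)).
    + apply derivable_continuous_pt. exists (d2F I2 y). now apply (dF_derivable (HF I2)).
    + apply cont_quad_interior; [now apply (dF_pos (HF I1)) | now apply (dF_pos (HF I2))|].
      apply cont_quad_of_loc_lipschitz; [apply HT|].
      split; simpl; apply Rlt_le; [now apply (dF_pos (HF I1)) | now apply (dF_pos (HF I2))].
  - destruct i; apply continuity_1d_2d_pt_comp;
      try apply continuity_2d_pt_id1; try apply continuity_2d_pt_id2;
      apply continuity_pt_of_cont_nonneg; simpl; try lra; apply HF; lra.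
Qed.

Lemma dh_differentiable j x y : 0 < x -> 0 < y ->
  differentiable_pt_lim (fun u v => dh j (u, v)) x y (hess j I1 (x, y)) (hess j I2 (x, y)).
Proof.
  intros Hx Hy.
  apply (differentiable_of_partials _ (fun u v => hess j I1 (u, v))
           (fun u v => hess j I2 (u, v))).
  - apply locally_2d_of_pos; [exact Hx | exact Hy | exact (dh_derivable_fst j)].
  - now apply hess_continuous.
  - now apply dh_derivable_snd.
Qed.

(* Schwarz's theorem, with the mixed partials continuous through theta. *)
Lemma hess_symmetric x y : 0 < x -> 0 < y -> hess I2 I1 (x, y) = hess I1 I2 (x, y).
Proof.
  intros Hx Hy.
  assert (E1 : forall u v, 0 < u -> 0 < v ->
            is_derive (fun z => Derive (fun t => h (z, t)) v) u (hess I2 I1 (u, v))).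
  { intros u v Hu Hv. apply is_derive_ext_loc with (f := fun z => dh I2 (z, v)).
    - apply (filter_imp (fun z => 0 < z)); [|now apply locally_pos].
      intros z Hz. symmetry. apply is_derive_unique, is_derive_Reals, h_derivable_snd; lra.
    - now apply is_derive_Reals, dh_derivable_fst. }
  assert (E2 : forall u v, 0 < u -> 0 < v ->
            is_derive (fun z => Derive (fun t => h (t, z)) u) v (hess I1 I2 (u, v))).
  { intros u v Hu Hv. apply is_derive_ext_loc with (f := fun z => dh I1 (u, z)).
    - apply (filter_imp (fun z => 0 < z)); [|now apply locally_pos].
      intros z Hz. symmetry. apply is_derive_unique, is_derive_Reals, h_derivable_fst; lra.
    - now apply is_derive_Reals, dh_derivable_snd. }
  rewrite <- (is_derive_unique _ _ _ (E1 x y Hx Hy)), <- (is_derive_unique _ _ _ (E2 x y Hx Hy)).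
  apply (Schwarz (fun u v => h (u, v))).
  - apply locally_2d_of_pos; [exact Hx | exact Hy|]. intros u v Hu Hv. repeat split.
    + exists (dh I1 (u, v)). now apply is_derive_Reals, h_derivable_fst.
    + exists (dh I2 (u, v)). now apply is_derive_Reals, h_derivable_snd.
    + eexists. now apply E1.
    + eexists. now apply E2.
  - apply continuity_2d_pt_ext_loc with (f := fun u v => hess I2 I1 (u, v));
      [|now apply hess_continuous].
    apply locally_2d_of_pos; [exact Hx | exact Hy|]. intros u v Hu Hv.
    symmetry. now apply is_derive_unique, E1.
  - apply continuity_2d_pt_ext_loc with (f := fun u v => hess I1 I2 (u, v));
      [|now apply hess_continuous].
    apply locally_2d_of_pos; [exact Hx | exact Hy|]. intros u v Hu Hv.
    symmetry. now apply is_derive_unique, E2.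
Qed.

Lemma hess_abs_le j i x y : 0 < x -> 0 < y ->
  Rabs (hess j i (x, y)) <=
  kappa j i * Rmin 1 (sqrt (coord i (x, y) / coord j (x, y))) * d2F i (coord i (x, y)).
Proof.
  intros Hx Hy. unfold hess. rewrite Rabs_mult.
  assert (Hd : 0 < d2F i (coord i (x, y))) by (destruct i; apply (d2F_pos (HF _)); simpl; lra).
  rewrite (Rabs_right (d2F i _)) by lra. apply Rmult_le_compat_r; [lra|].
  assert (Hq : quad (dF_pair dF (x, y))) by (apply (quad_dF_pair HF); split; simpl; lra).
  destruct HT as [_ [_ [Hk Hb]]]. specialize (Hb j i _ Hq).
  assert (E : forall k, finv (dF k) (coord k (dF_pair dF (x, y))) = coord k (x, y))
    by (intros []; simpl; apply (finv_dF (HF _)); lra).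
  rewrite !E in Hb. eapply Rle_trans; [exact Hb|].
  apply Rmult_le_compat_l; [apply Rlt_le, Hk|].
  apply Rle_min_compat_r, Rmin_l.
Qed.

Lemma hess_diag_abs_le i x y : 0 < x -> 0 < y ->
  Rabs (hess i i (x, y)) <= kappa i i * d2F i (coord i (x, y)).
Proof.
  intros Hx Hy. eapply Rle_trans; [now apply hess_abs_le|].
  assert (0 < d2F i (coord i (x, y))) by (destruct i; apply (d2F_pos (HF _)); simpl; lra).
  assert (0 < kappa i i) by now apply (kappa_pos HT).
  assert (Rmin 1 (sqrt (coord i (x, y) / coord i (x, y))) <= 1) by apply Rmin_l.
  assert (0 <= Rmin 1 (sqrt (coord i (x, y) / coord i (x, y))))
    by (apply Rmin_glb; [lra | apply sqrt_pos]).
  apply Rmult_le_compat_r; [lra|].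
  rewrite <- (Rmult_1_r (kappa i i)) at 2. apply Rmult_le_compat_l; lra.
Qed.

(* The factors sqrt(r_i / r_j) of the two cross bounds cancel, thanks to symmetry. *)
Lemma hess_offdiag_sq_le x y : 0 < x -> 0 < y ->
  hess I2 I1 (x, y) ^ 2 <= kappa I2 I1 * kappa I1 I2 * d2F I1 x * d2F I2 y.
Proof.
  intros Hx Hy.
  assert (B1 := hess_abs_le I2 I1 x y Hx Hy). assert (B2 := hess_abs_le I1 I2 x y Hx Hy).
  rewrite <- hess_symmetric in B2 by assumption. cbn [coord fst snd] in B1, B2.
  set (X := hess I2 I1 (x, y)) in *.
  assert (Hs : sqrt (x / y) * sqrt (y / x) = 1).
  { rewrite <- sqrt_mult_alt by (apply Rdiv_le_0_compat; lra).
    replace (x / y * (y / x)) with 1 by (field; lra). apply sqrt_1. }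
  assert (Hm1 := Rmin_r 1 (sqrt (x / y))). assert (Hm2 := Rmin_r 1 (sqrt (y / x))).
  assert (Hp1 : 0 <= Rmin 1 (sqrt (x / y))) by (apply Rmin_glb; [lra | apply sqrt_pos]).
  assert (Hp2 : 0 <= Rmin 1 (sqrt (y / x))) by (apply Rmin_glb; [lra | apply sqrt_pos]).
  assert (0 < d2F I1 x) by now apply (d2F_pos (HF I1)).
  assert (0 < d2F I2 y) by now apply (d2F_pos (HF I2)).
  assert (0 < kappa I2 I1) by apply (kappa_pos HT).
  assert (0 < kappa I1 I2) by apply (kappa_pos HT).
  rewrite <- pow2_abs.
  apply Rle_trans with ((kappa I2 I1 * Rmin 1 (sqrt (x / y)) * d2F I1 x) *
                        (kappa I1 I2 * Rmin 1 (sqrt (y / x)) * d2F I2 y)).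
  - simpl. rewrite Rmult_1_r. apply Rmult_le_compat; try apply Rabs_pos; assumption.
  - assert (Rmin 1 (sqrt (x / y)) * Rmin 1 (sqrt (y / x)) <= 1).
    { apply Rle_trans with (sqrt (x / y) * sqrt (y / x)); [|lra].
      apply Rmult_le_compat; assumption. }
    assert (0 <= kappa I2 I1 * kappa I1 I2 * d2F I1 x * d2F I2 y)
      by (repeat apply Rmult_le_pos; lra).
    replace (kappa I2 I1 * Rmin 1 (sqrt (x / y)) * d2F I1 x *
             (kappa I1 I2 * Rmin 1 (sqrt (y / x)) * d2F I2 y))
      with (kappa I2 I1 * kappa I1 I2 * d2F I1 x * d2F I2 y *
            (Rmin 1 (sqrt (x / y)) * Rmin 1 (sqrt (y / x)))) by ring.
    rewrite <- (Rmult_1_r (kappa I2 I1 * kappa I1 I2 * d2F I1 x * d2F I2 y)) at 2.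
    apply Rmult_le_compat_l; assumption.
Qed.

Lemma Feps_cont_quad e p : quad p -> cont_quad (Feps F h e) p.
Proof.
  intros [Hp1 Hp2].
  assert (Hfst : filterlim fst (within quad (locally p)) (within nonneg (locally (fst p)))).
  { intros P [d Hd]. exists d. intros z [Hz _] [Hz1 _]. now apply Hd. }
  assert (Hsnd : filterlim snd (within quad (locally p)) (within nonneg (locally (snd p)))).
  { intros P [d Hd]. exists d. intros z [_ Hz] [_ Hz2]. now apply Hd. }
  assert (H1 : filterlim (fun z => F I1 (fst z)) (within quad (locally p))
                 (locally (F I1 (fst p))))
    by (eapply filterlim_comp; [exact Hfst | now apply (F_cont_nonneg (HF I1))]).
  assert (H2 : filterlim (fun z => F I2 (snd z)) (within quad (locally p))
                 (locally (F I2 (snd p))))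
    by (eapply filterlim_comp; [exact Hsnd | now apply (F_cont_nonneg (HF I2))]).
  assert (H3 : filterlim (fun z => e * h z) (within quad (locally p)) (locally (e * h p))).
  { eapply filterlim_comp_2; [apply filterlim_const | apply Hh; split; assumption |].
    apply (filterlim_mult e (h p)). }
  exact (filterlim_comp_2 _ _ _ (filterlim_comp_2 _ _ _ H1 H2 (filterlim_plus _ _)) H3
           (filterlim_plus _ _)).
Qed.

Lemma Feps_seg_derivable e p1 p2 q1 q2 s : 0 < seg q1 p1 s -> 0 < seg q2 p2 s ->
  derivable_pt_lim (fun s => Feps F h e (seg q1 p1 s, seg q2 p2 s)) s
    (dF I1 (seg q1 p1 s) * (p1 - q1) + dF I2 (seg q2 p2 s) * (p2 - q2) +
     e * (dh I1 (seg q1 p1 s, seg q2 p2 s) * (p1 - q1) +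
          dh I2 (seg q1 p1 s, seg q2 p2 s) * (p2 - q2))).
Proof.
  intros H1 H2. unfold Feps; simpl. eapply dpl_value.
  - apply dpl_plus; [apply dpl_plus|].
    + apply (dpl_comp (F I1) (seg q1 p1)); [apply seg_derivable|].
      now apply (F_derivable (HF I1)).
    + apply (dpl_comp (F I2) (seg q2 p2)); [apply seg_derivable|].
      now apply (F_derivable (HF I2)).
    + apply dpl_scal.
      apply (derivable_pt_lim_comp_2d (fun u v => h (u, v)) (seg q1 p1) (seg q2 p2));
        [now apply h_differentiable | apply seg_derivable | apply seg_derivable].
  - ring.
Qed.

Lemma Feps_seg_slope_derivable e p1 p2 q1 q2 s : 0 < seg q1 p1 s -> 0 < seg q2 p2 s ->
  derivable_pt_lim (fun s =>
      dF I1 (seg q1 p1 s) * (p1 - q1) + dF I2 (seg q2 p2 s) * (p2 - q2) +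
      e * (dh I1 (seg q1 p1 s, seg q2 p2 s) * (p1 - q1) +
           dh I2 (seg q1 p1 s, seg q2 p2 s) * (p2 - q2))) s
    (d2F I1 (seg q1 p1 s) * (p1 - q1) * (p1 - q1) +
     d2F I2 (seg q2 p2 s) * (p2 - q2) * (p2 - q2) +
     e * ((hess I1 I1 (seg q1 p1 s, seg q2 p2 s) * (p1 - q1) +
           hess I1 I2 (seg q1 p1 s, seg q2 p2 s) * (p2 - q2)) * (p1 - q1) +
          (hess I2 I1 (seg q1 p1 s, seg q2 p2 s) * (p1 - q1) +
           hess I2 I2 (seg q1 p1 s, seg q2 p2 s) * (p2 - q2)) * (p2 - q2))).
Proof.
  intros H1 H2.
  assert (Hdh : forall j, derivable_pt_lim (fun s => dh j (seg q1 p1 s, seg q2 p2 s)) s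
     (hess j I1 (seg q1 p1 s, seg q2 p2 s) * (p1 - q1) +
      hess j I2 (seg q1 p1 s, seg q2 p2 s) * (p2 - q2))).
  { intros j.
    apply (derivable_pt_lim_comp_2d (fun u v => dh j (u, v)) (seg q1 p1) (seg q2 p2));
      [now apply dh_differentiable | apply seg_derivable | apply seg_derivable]. }
  eapply dpl_value.
  - apply dpl_plus; [apply dpl_plus|].
    + apply dpl_mult; [|apply derivable_pt_lim_const].
      apply (dpl_comp (dF I1) (seg q1 p1)); [apply seg_derivable|].
      now apply (dF_derivable (HF I1)).
    + apply dpl_mult; [|apply derivable_pt_lim_const].
      apply (dpl_comp (dF I2) (seg q2 p2)); [apply seg_derivable|].
      now apply (dF_derivable (HF I2)).
    + apply dpl_scal, dpl_plus; (apply dpl_mult; [apply Hdh | apply derivable_pt_lim_const]).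
  - cbv beta. ring.
Qed.

(* Positive definiteness of the Hessian of F_{2 eps} at interior points. *)
Lemma Feps_seg_slope_deriv_pos eps x y w1 w2 : 0 < x -> 0 < y -> 0 < eps ->
  eps * (4 * kappa_sum kappa) <= 1 -> (w1 <> 0 \/ w2 <> 0) ->
  0 < d2F I1 x * w1 * w1 + d2F I2 y * w2 * w2 +
      2 * eps * ((hess I1 I1 (x, y) * w1 + hess I1 I2 (x, y) * w2) * w1 +
                 (hess I2 I1 (x, y) * w1 + hess I2 I2 (x, y) * w2) * w2).
Proof.
  intros Hx Hy He HeK Hw.
  rewrite <- hess_symmetric by assumption.
  assert (Ha : 0 < d2F I1 x) by now apply (d2F_pos (HF I1)).
  assert (Hb : 0 < d2F I2 y) by now apply (d2F_pos (HF I2)).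
  assert (Hk := kappa_pos HT).
  assert (Hform := quadratic_form_lower_bound (d2F I1 x) (d2F I2 y)
    (hess I1 I1 (x, y)) (hess I2 I2 (x, y)) (hess I2 I1 (x, y))
    (kappa I1 I1) (kappa I1 I2) (kappa I2 I1) (kappa I2 I2) eps w1 w2).
  assert (Hpos : 0 < d2F I1 x * w1 ^ 2 + d2F I2 y * w2 ^ 2).
  { assert (0 <= w1 ^ 2) by apply pow2_ge_0. assert (0 <= w2 ^ 2) by apply pow2_ge_0.
    destruct Hw as [Hw|Hw].
    - assert (0 < w1 ^ 2) by (apply pow2_gt_0; exact Hw). nra.
    - assert (0 < w2 ^ 2) by (apply pow2_gt_0; exact Hw). nra. }
  assert (Hoff := hess_offdiag_sq_le x y Hx Hy).
  assert (Hd1 := hess_diag_abs_le I1 x y Hx Hy). assert (Hd2 := hess_diag_abs_le I2 x y Hx Hy).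
  cbn [coord fst snd] in Hd1, Hd2. unfold kappa_sum in HeK.
  specialize (Hform ltac:(lra) ltac:(lra) (Rlt_le _ _ (Hk I1 I1)) (Rlt_le _ _ (Hk I2 I2))
    (Rlt_le _ _ (Hk I1 I2)) (Rlt_le _ _ (Hk I2 I1)) ltac:(lra) HeK Hd1 Hd2 ltac:(lra)).
  lra.
Qed.

Lemma Feps_seg_slope_increasing_interior eps p q : 0 < eps ->
  eps * (4 * kappa_sum kappa) <= 1 -> p <> q ->
  (forall s, 0 < s < 1 -> 0 < seg (fst q) (fst p) s /\ 0 < seg (snd q) (snd p) s) ->
  slope_increasing (fun s => Feps F h (2 * eps) (seg (fst q) (fst p) s, seg (snd q) (snd p) s)).
Proof.
  intros He HeK Hpq Hint. destruct p as [p1 p2], q as [q1 q2]. simpl in Hint |- *.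
  assert (Hw : p1 - q1 <> 0 \/ p2 - q2 <> 0).
  { destruct (Req_dec p1 q1); [right | left; lra]. intro. apply Hpq. f_equal; lra. }
  eexists. split.
  - intros s Hs. destruct (Hint s Hs). now apply Feps_seg_derivable.
  - intros s t Hs Hst Ht.
    eapply (lt_of_deriv_pos _ _ s t Hst).
    + intros x Hx. destruct (Hint x ltac:(lra)). now apply Feps_seg_slope_derivable.
    + intros x Hx. destruct (Hint x ltac:(lra)).
      now apply Feps_seg_slope_deriv_pos.
    + destruct (Hint s ltac:(lra)). eapply right_cont_of_derivable.
      now apply Feps_seg_slope_derivable.
Qed.

Lemma Feps_seg_slope_increasing_axis e p q : quad p -> quad q -> p <> q ->
  (fst p = 0 /\ fst q = 0) \/ (snd p = 0 /\ snd q = 0) ->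
  slope_increasing (fun s => Feps F h e (seg (fst q) (fst p) s, seg (snd q) (snd p) s)).
Proof.
  intros [Hp1 Hp2] [Hq1 Hq2] Hpq Hax. unfold Feps. cbn [fst snd].
  assert (Hseg0 : forall s, seg 0 0 s = 0) by (intros; unfold seg; ring).
  destruct p as [p1 p2], q as [q1 q2]. simpl in *.
  destruct Hax as [[-> ->]|[-> ->]].
  - apply (slope_increasing_ext (fun s => F I2 (seg q2 p2 s))).
    + intros s Hs. rewrite Hseg0, (F_0 (HF I1)).
      destruct (h_dh_vanish_on_axis Hh (0, seg q2 p2 s)) as [Hz _];
        [split; simpl; [lra | apply seg_nonneg; lra] | now left | rewrite Hz; ring].
    + apply (F_seg_slope_increasing (HF I2)); [lra | lra |]. intros <-. now apply Hpq.
  - apply (slope_increasing_ext (fun s => F I1 (seg q1 p1 s))).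
    + intros s Hs. rewrite Hseg0, (F_0 (HF I2)).
      destruct (h_dh_vanish_on_axis Hh (seg q1 p1 s, 0)) as [Hz _];
        [split; simpl; [apply seg_nonneg; lra | lra] | now right | rewrite Hz; ring].
    + apply (F_seg_slope_increasing (HF I1)); [lra | lra |]. intros <-. now apply Hpq.
Qed.

(* Along a segment, F_{2 eps} has an increasing slope: on an axis it reduces to one F_j,
   elsewhere the open segment is interior and the Hessian is positive definite. *)
Lemma Feps_strictly_convex eps : 0 < eps -> eps * (4 * kappa_sum kappa) <= 1 ->
  strictly_convex_quad (Feps F h (2 * eps)).
Proof.
  intros He HeK p q t Hp Hq Hpq Ht.
  set (g := fun s => Feps F h (2 * eps) (seg (fst q) (fst p) s, seg (snd q) (snd p) s)).
  assert (E1 : g 1 = Feps F h (2 * eps) p)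
    by (unfold g, seg; destruct p; simpl; do 2 f_equal; ring).
  assert (E0 : g 0 = Feps F h (2 * eps) q)
    by (unfold g, seg; destruct q; simpl; do 2 f_equal; ring).
  change (g t < t * Feps F h (2 * eps) p + (1 - t) * Feps F h (2 * eps) q).
  rewrite <- E1, <- E0. apply convex_lt_of_slope_increasing; [ | | | exact Ht].
  - destruct (classic ((fst p = 0 /\ fst q = 0) \/ (snd p = 0 /\ snd q = 0))) as [Hax|Hax];
      [now apply Feps_seg_slope_increasing_axis|].
    apply Feps_seg_slope_increasing_interior; [exact He | exact HeK | exact Hpq |].
    destruct Hp as [Hp1 Hp2], Hq as [Hq1 Hq2].
    intros s Hs. split; apply seg_pos; auto; lra.
  - apply cont_quad_right_cont_seg; [exact Hp | exact Hq |]. now apply Feps_cont_quad.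
  - apply (right_cont_ext
      (fun s => Feps F h (2 * eps) (seg (fst p) (fst q) s, seg (snd p) (snd q) s))).
    + intros s. unfold g. now rewrite !seg_flip.
    + apply cont_quad_right_cont_seg; [exact Hq | exact Hp |]. now apply Feps_cont_quad.
Qed.

End Hessian.

(** * Increments of theta_{j,i} *)

Lemma sq_le_of_abs_le_sum T L e1 e2 c d1 d2 : Rabs T <= L * (Rabs e1 + Rabs e2) ->
  e1 ^ 2 <= c * d1 -> e2 ^ 2 <= c * d2 -> T ^ 2 <= 2 * L ^ 2 * c * (d1 + d2).
Proof.
  intros HTL H1 H2.
  assert (T ^ 2 <= L ^ 2 * (Rabs e1 + Rabs e2) ^ 2).
  { rewrite <- pow2_abs, <- Rpow_mult_distr. apply pow_incr. split; [apply Rabs_pos | exact HTL]. }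
  assert ((Rabs e1 + Rabs e2) ^ 2 <= 2 * (e1 ^ 2 + e2 ^ 2)).
  { rewrite <- (pow2_abs e1), <- (pow2_abs e2).
    pose proof (pow2_ge_0 (Rabs e1 - Rabs e2)). nra. }
  assert (0 <= L ^ 2) by apply pow2_ge_0.
  nra.
Qed.

Lemma far_sum_bound H a1 a2 d1 d2 c : 0 <= H -> 0 <= a1 -> 0 <= a2 -> 0 < c ->
  0 <= d1 -> 0 <= d2 ->
  (a1 < 1 \/ c * (1 + a1) <= d1) -> (a2 < 1 \/ c * (1 + a2) <= d2) ->
  (c * (1 + a1) <= d1 \/ c * (1 + a2) <= d2) ->
  c * (H + a1 + a2) <= (H + 1) * (d1 + d2).
Proof.
  intros HH Ha1 Ha2 Hc Hd1 Hd2 A1 A2 Hfar.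
  assert (0 <= c * H) by (apply Rmult_le_pos; lra).
  assert (0 <= c * (H * a1)) by (apply Rmult_le_pos; [lra | nra]).
  assert (0 <= c * (H * a2)) by (apply Rmult_le_pos; [lra | nra]).
  assert (N1 : a1 < 1 -> c * a1 <= c * 1) by (intros; apply Rmult_le_compat_l; lra).
  assert (N2 : a2 < 1 -> c * a2 <= c * 1) by (intros; apply Rmult_le_compat_l; lra).
  assert (F1 : c * (1 + a1) <= d1 -> (H + 1) * (c * (1 + a1)) <= (H + 1) * d1)
    by (intros; apply Rmult_le_compat_l; lra).
  assert (F2 : c * (1 + a2) <= d2 -> (H + 1) * (c * (1 + a2)) <= (H + 1) * d2)
    by (intros; apply Rmult_le_compat_l; lra).
  assert (0 <= (H + 1) * d1) by (apply Rmult_le_pos; lra).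
  assert (0 <= (H + 1) * d2) by (apply Rmult_le_pos; lra).
  destruct A1 as [A1|A1]; destruct A2 as [A2|A2].
  - destruct Hfar as [Hf|Hf]; [specialize (F1 Hf) | specialize (F2 Hf)];
      specialize (N1 A1); specialize (N2 A2); lra.
  - specialize (F2 A2). specialize (N1 A1). lra.
  - specialize (F1 A1). specialize (N2 A2). lra.
  - specialize (F1 A1). specialize (F2 A2). lra.
Qed.

Section ThetaIncrement.

Context {F dF d2F : idx -> R -> R} {m M beta : idx -> R} {r0 : R}
  {dh : idx -> R * R -> R} {Th : idx -> idx -> R * R -> R} {kappa : idx -> idx -> R}
  (HF : forall j, HypF (F j) (dF j) (d2F j) (m j) (M j) (beta j) r0)
  (HT : HypTheta dF dh Th kappa).

Definition bregman_sum (r rb : R * R) : R :=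
  bregman (F I1) (dF I1) (fst r) (fst rb) + bregman (F I2) (dF I2) (snd r) (snd rb).

Lemma bregman_sum_nonneg r rb : quad r -> quad rb -> 0 <= bregman_sum r rb.
Proof.
  intros [Hr1 Hr2] [Hrb1 Hrb2]. unfold bregman_sum.
  pose proof (bregman_nonneg (HF I1) _ _ Hr1 Hrb1).
  pose proof (bregman_nonneg (HF I2) _ _ Hr2 Hrb2). lra.
Qed.

Lemma Th_lipschitz_on_image j i B : 0 <= B -> exists rho L, 0 < rho /\ 0 <= L /\
  forall r rb, 0 <= fst r <= B -> 0 <= snd r <= B -> 0 <= fst rb <= B -> 0 <= snd rb <= B ->
    Rabs (dF I1 (fst r) - dF I1 (fst rb)) < rho -> Rabs (dF I2 (snd r) - dF I2 (snd rb)) < rho ->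
    Rabs (Th j i (dF_pair dF r) - Th j i (dF_pair dF rb)) <=
    L * (Rabs (dF I1 (fst r) - dF I1 (fst rb)) + Rabs (dF I2 (snd r) - dF I2 (snd rb))).
Proof.
  intros HB. set (A := Rmax (dF I1 B) (dF I2 B)).
  assert (Box : forall k x, 0 <= x <= B -> 0 <= dF k x <= A).
  { intros k x Hx. split; [apply (dF_nonneg (HF k)); lra|].
    apply Rle_trans with (dF k B); [apply (dF_le (HF k)); lra|].
    unfold A. destruct k; [apply Rmax_l | apply Rmax_r]. }
  destruct (loc_lipschitz_uniform_on_box (Th j i) A (proj1 (proj2 HT) j i))
    as [rho [L [Hrho [HL Hlip]]]].
  exists rho, L. split; [exact Hrho|]. split; [exact HL|].
  intros r rb Hr1 Hr2 Hrb1 Hrb2 N1 N2. apply Hlip; simpl; auto.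
Qed.

(* Near the diagonal: theta_{j,i} is Lipschitz on a compact box and dF_k is Lipschitz
   with (dF r - dF rb)^2 controlled by the Bregman divergence. *)
Lemma theta_increment_near j i H : 0 < H ->
  exists del b, 0 < del <= 1 /\ 0 <= b /\ forall rb r, quad rb -> fst rb <= H ->
    snd rb <= H -> quad r -> Rabs (fst r - fst rb) < del -> Rabs (snd r - snd rb) < del ->
    (Th j i (dF_pair dF r) - Th j i (dF_pair dF rb)) ^ 2 <= b * bregman_sum r rb.
Proof.
  intros HH. set (B := H + 1).
  destruct (d2F_bounded_on (HF I1) B ltac:(unfold B; lra)) as [L1 [HL1 BL1]].
  destruct (d2F_bounded_on (HF I2) B ltac:(unfold B; lra)) as [L2 [HL2 BL2]].
  set (La := L1 + L2). assert (HLa : 0 < La) by (unfold La; lra).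
  assert (BL : forall k x, 0 <= x <= B -> d2F k x <= La)
    by (intros [] x Hx; [specialize (BL1 x Hx) | specialize (BL2 x Hx)]; unfold La; lra).
  destruct (Th_lipschitz_on_image j i B ltac:(unfold B; lra)) as [rho [L [Hrho [HL Hlip]]]].
  set (del := Rmin 1 (rho / La)).
  assert (Hdel : 0 < del <= 1)
    by (split; [apply Rmin_pos; [lra | apply Rdiv_lt_0_compat; lra] | apply Rmin_l]).
  assert (Hsmall : forall x, x < del -> La * x < rho).
  { intros x Hx. apply Rlt_le_trans with (La * del); [apply Rmult_lt_compat_l; lra|].
    apply Rle_trans with (La * (rho / La)); [apply Rmult_le_compat_l; [lra | apply Rmin_r]|].
    right. field. lra. }
  exists del, (2 * L ^ 2 * (2 * La)). split; [exact Hdel|]. split; [nra|].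
  intros [rb1 rb2] [r1 r2] [Hrb1 Hrb2] HrbH1 HrbH2 [Hr1 Hr2] N1 N2. simpl in *.
  assert (Hr1B : r1 <= B) by (apply Rabs_def2 in N1; unfold B; lra).
  assert (Hr2B : r2 <= B) by (apply Rabs_def2 in N2; unfold B; lra).
  assert (E1 := dF_abs_diff_le (HF I1) La B r1 rb1 (BL I1) ltac:(lra) ltac:(unfold B; lra)).
  assert (E2 := dF_abs_diff_le (HF I2) La B r2 rb2 (BL I2) ltac:(lra) ltac:(unfold B; lra)).
  unfold bregman_sum. simpl.
  apply (sq_le_of_abs_le_sum _ L (dF I1 r1 - dF I1 rb1) (dF I2 r2 - dF I2 rb2)).
  - apply (Hlip (r1, r2) (rb1, rb2)); simpl; try (unfold B in *; lra).
    + apply Rle_lt_trans with (1 := E1), Hsmall, N1.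
    + apply Rle_lt_trans with (1 := E2), Hsmall, N2.
  - apply (dF_diff_sq_le_bregman (HF I1) La B); [apply BL | lra | unfold B; lra].
  - apply (dF_diff_sq_le_bregman (HF I2) La B); [apply BL | lra | unfold B; lra].
Qed.

Lemma theta_increment_sq_le_kappa j i r rb : quad r -> quad rb ->
  (Th j i (dF_pair dF r) - Th j i (dF_pair dF rb)) ^ 2 <= 4 * kappa j i ^ 2.
Proof.
  intros Hr Hrb.
  assert (T1 := Th_abs_le_kappa HT j i _ (quad_dF_pair HF r Hr)).
  assert (T2 := Th_abs_le_kappa HT j i _ (quad_dF_pair HF rb Hrb)).
  replace (4 * kappa j i ^ 2) with ((2 * kappa j i) ^ 2) by ring. rewrite <- pow2_abs.
  apply pow_incr. split; [apply Rabs_pos|].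
  eapply Rle_trans; [apply Rabs_triang|]. rewrite Rabs_Ropp. lra.
Qed.

(* Far from the diagonal: theta is bounded by kappa, and the Bregman divergence grows
   linearly, which pays for the factor max(r_1, r_2). *)
Lemma theta_increment_far j i H del : 0 < H -> 0 < del <= 1 ->
  exists b, 0 <= b /\ forall rb r, quad rb -> fst rb <= H -> snd rb <= H -> quad r ->
    (del <= Rabs (fst r - fst rb) \/ del <= Rabs (snd r - snd rb)) ->
    Rmax (fst r) (snd r) * (Th j i (dF_pair dF r) - Th j i (dF_pair dF rb)) ^ 2
    <= b * bregman_sum r rb.
Proof.
  intros HH Hdel.
  destruct (bregman_ge_far (HF I1) H del ltac:(lra) ltac:(lra)) as [c1 [Hc1 Far1]].
  destruct (bregman_ge_far (HF I2) H del ltac:(lra) ltac:(lra)) as [c2 [Hc2 Far2]].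
  set (c := Rmin c1 c2). assert (Hc : 0 < c) by now apply Rmin_pos.
  assert (Hcc1 := Rmin_l c1 c2). assert (Hcc2 := Rmin_r c1 c2). fold c in Hcc1, Hcc2.
  set (k := kappa j i). assert (Hk : 0 < k) by apply (kappa_pos HT).
  exists (4 * k ^ 2 * ((H + 1) / c)).
  split; [apply Rmult_le_pos; [nra | apply Rdiv_le_0_compat; lra]|].
  intros rb r Hrb HrbH1 HrbH2 Hr Hfar.
  assert (HT2 := theta_increment_sq_le_kappa j i r rb Hr Hrb). fold k in HT2.
  destruct Hr as [Hr1 Hr2], Hrb as [Hrb1 Hrb2].
  set (a1 := Rabs (fst r - fst rb)) in *. set (a2 := Rabs (snd r - snd rb)) in *.
  assert (Ha1 : 0 <= a1) by apply Rabs_pos. assert (Ha2 : 0 <= a2) by apply Rabs_pos.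
  assert (Hmax : Rmax (fst r) (snd r) <= H + a1 + a2).
  { pose proof (Rle_abs (fst r - fst rb)). pose proof (Rle_abs (snd r - snd rb)).
    apply Rmax_lub; unfold a1, a2 in *; lra. }
  assert (G1 : del <= a1 -> c * (1 + a1) <= bregman (F I1) (dF I1) (fst r) (fst rb)).
  { intros Ha. specialize (Far1 _ _ Hr1 (conj Hrb1 HrbH1) Ha). fold a1 in Far1.
    assert (c * (1 + a1) <= c1 * (1 + a1)) by (apply Rmult_le_compat_r; lra). lra. }
  assert (G2 : del <= a2 -> c * (1 + a2) <= bregman (F I2) (dF I2) (snd r) (snd rb)).
  { intros Ha. specialize (Far2 _ _ Hr2 (conj Hrb2 HrbH2) Ha). fold a2 in Far2.
    assert (c * (1 + a2) <= c2 * (1 + a2)) by (apply Rmult_le_compat_r; lra). lra. }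
  assert (Hsum : c * (H + a1 + a2) <= (H + 1) * bregman_sum r rb).
  { apply far_sum_bound; [lra | exact Ha1 | exact Ha2 | exact Hc | | | | |].
    - exact (bregman_nonneg (HF I1) _ _ Hr1 Hrb1).
    - exact (bregman_nonneg (HF I2) _ _ Hr2 Hrb2).
    - destruct (Rlt_or_le a1 del); [left; lra | right; auto].
    - destruct (Rlt_or_le a2 del); [left; lra | right; auto].
    - destruct Hfar; [left | right]; auto. }
  apply Rle_trans with ((H + a1 + a2) * (4 * k ^ 2)).
  - apply Rmult_le_compat; [eapply Rle_trans; [exact Hr1 | apply Rmax_l] | apply pow2_ge_0
                            | exact Hmax | exact HT2].
  - replace (4 * k ^ 2 * ((H + 1) / c) * bregman_sum r rb)
      with (4 * k ^ 2 * ((H + 1) * bregman_sum r rb / c)) by (field; lra).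
    rewrite (Rmult_comm (H + a1 + a2)). apply Rmult_le_compat_l; [nra|].
    apply Rle_div_r; [exact Hc | lra].
Qed.

Lemma theta_increment_bound j i H : 0 < H ->
  exists b, 0 < b /\ forall rb r, quad rb -> fst rb <= H -> snd rb <= H -> quad r ->
    Rmax (fst r) (snd r) * (Th j i (dF_pair dF r) - Th j i (dF_pair dF rb)) ^ 2
    <= b * bregman_sum r rb.
Proof.
  intros HH.
  destruct (theta_increment_near j i H HH) as [del [b1 [Hdel [Hb1 Near]]]].
  destruct (theta_increment_far j i H del HH Hdel) as [b2 [Hb2 Far]].
  exists ((H + 1) * b1 + b2 + 1). split; [nra|].
  intros rb r Hrb HrbH1 HrbH2 Hr.
  assert (HS := bregman_sum_nonneg r rb Hr Hrb).
  set (T := Th j i (dF_pair dF r) - Th j i (dF_pair dF rb)).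
  assert (Hfar : forall b, b2 <= b ->
            (del <= Rabs (fst r - fst rb) \/ del <= Rabs (snd r - snd rb)) ->
            Rmax (fst r) (snd r) * T ^ 2 <= b * bregman_sum r rb).
  { intros b Hb Hd. eapply Rle_trans; [now apply Far|]. now apply Rmult_le_compat_r. }
  destruct (Rlt_or_le (Rabs (fst r - fst rb)) del) as [N1|F1];
    [destruct (Rlt_or_le (Rabs (snd r - snd rb)) del) as [N2|F2]|];
    [| apply Hfar; [nra | now right] | apply Hfar; [nra | now left]].
  assert (HT2 := Near rb r Hrb HrbH1 HrbH2 Hr N1 N2). fold T in HT2.
  assert (Hmax : Rmax (fst r) (snd r) <= H + 1).
  { apply Rabs_def2 in N1. apply Rabs_def2 in N2. apply Rmax_lub; lra. }
  assert (0 <= Rmax (fst r) (snd r)) by (eapply Rle_trans; [apply (proj1 Hr) | apply Rmax_l]).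
  assert (Rmax (fst r) (snd r) * T ^ 2 <= (H + 1) * (b1 * bregman_sum r rb))
    by (apply Rmult_le_compat; [assumption | apply pow2_ge_0 | assumption | assumption]).
  assert (0 <= b2 * bregman_sum r rb) by (apply Rmult_le_pos; assumption).
  nra.
Qed.

Lemma theta_increment_bound_all H : 0 < H -> exists betaH, 0 < betaH /\
  forall rb r i j, quad rb -> fst rb <= H -> snd rb <= H -> quad r ->
    Rmax (fst r) (snd r) *
      (Th j i (dF I1 (fst r), dF I2 (snd r)) - Th j i (dF I1 (fst rb), dF I2 (snd rb))) ^ 2
    <= betaH * (bregman (F I1) (dF I1) (fst r) (fst rb)
                + bregman (F I2) (dF I2) (snd r) (snd rb)).
Proof.
  intros HH.
  destruct (theta_increment_bound I1 I1 H HH) as [b11 [H11 B11]].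
  destruct (theta_increment_bound I1 I2 H HH) as [b12 [H12 B12]].
  destruct (theta_increment_bound I2 I1 H HH) as [b21 [H21 B21]].
  destruct (theta_increment_bound I2 I2 H HH) as [b22 [H22 B22]].
  exists (b11 + b12 + b21 + b22). split; [lra|].
  intros rb r i j Hrb H1 H2 Hr. fold (bregman_sum r rb).
  assert (HS := bregman_sum_nonneg r rb Hr Hrb).
  destruct j, i;
    (eapply Rle_trans; [apply B11 || apply B12 || apply B21 || apply B22; assumption|]);
    apply Rmult_le_compat_r; lra.
Qed.

End ThetaIncrement.

Theorem proposition2p4
  (F dF d2F : idx -> R -> R) (m M beta : idx -> R) (r0 : R)
  (h : R * R -> R) (dh : idx -> R * R -> R) (d2h : idx -> idx -> R * R -> R)
  (Th : idx -> idx -> R * R -> R) (kappa : idx -> idx -> R)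
  (HF : forall j, HypF (F j) (dF j) (d2F j) (m j) (M j) (beta j) r0)
  (Hh : Hyph h dh d2h)
  (HT : HypTheta dF dh Th kappa) :
  (* (1) and (2) *)
  (exists eps0, 0 < eps0 /\
     (forall eps, 0 < eps <= eps0 -> convex_quad (Feps F h (2 * eps))) /\
     (forall eps, 0 < eps < eps0 -> strictly_convex_quad (Feps F h (2 * eps))) /\
     (forall eps p, 0 < eps <= eps0 -> quad p ->
        / 2 * F I1 (fst p) + / 2 * F I2 (snd p) <= Feps F h eps p /\
        Feps F h eps p <= (1 + eps / 2 * kappa I1 I1) * F I1 (fst p)
                          + (1 + eps / 2 * kappa I2 I2) * F I2 (snd p))) /\
  (* (3) *)
  (forall j r, 0 <= r <= r0 ->
     m j / (beta j + 1) * pw r (beta j + 1) <= dF j r <=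
       M j / (beta j + 1) * pw r (beta j + 1) /\
     m j / ((beta j + 1) * (beta j + 2)) * pw r (beta j + 2) <= F j r <=
       M j / ((beta j + 1) * (beta j + 2)) * pw r (beta j + 2)) /\
  (* (4) *)
  (forall j, exists alpha, forall r, 0 <= r ->
     dF j r <= alpha * (Rmin 1 r + F j r)) /\
  (* (5) *)
  (forall H, 0 < H -> exists betaH, 0 < betaH /\
     forall rb r i j, quad rb -> fst rb <= H -> snd rb <= H -> quad r ->
       Rmax (fst r) (snd r) *
         (Th j i (dF I1 (fst r), dF I2 (snd r))
          - Th j i (dF I1 (fst rb), dF I2 (snd rb))) ^ 2
       <= betaH * (bregman (F I1) (dF I1) (fst r) (fst rb)
                   + bregman (F I2) (dF I2) (snd r) (snd rb))).
Proof.
  assert (HK := kappa_sum_pos HT).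
  set (eps0 := / (4 * kappa_sum kappa)).
  assert (Hsmall : forall eps, 0 < eps <= eps0 -> eps * (4 * kappa_sum kappa) <= 1).
  { intros eps [_ He]. rewrite <- (Rinv_l (4 * kappa_sum kappa)) by lra.
    apply Rmult_le_compat_r; [lra | exact He]. }
  split; [|split; [|split]].
  - exists eps0. split; [apply Rinv_0_lt_compat; lra|]. split; [|split].
    + intros eps He. apply convex_of_strictly_convex.
      apply (Feps_strictly_convex HF Hh HT); [lra | now apply Hsmall].
    + intros eps He. apply (Feps_strictly_convex HF Hh HT); [lra | apply Hsmall; lra].
    + intros eps p He Hp. apply (Feps_bounds HF Hh HT); [lra | now apply Hsmall | exact Hp].
  - intros j r Hr. exact (dF_F_power_bounds (HF j) r Hr).
  - intros j. exact (dF_le_min1_plus_F (HF j)).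
  - exact (theta_increment_bound_all HF HT).
Qed.
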